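(* Let $p\in[1,\infty]$ and $q$ with $\frac1p+\frac1q=1$. Let $f=(f_i)_{i\in\mathbb N}\in\ell_q$ with $f_i\ge0$ for all $i$, and let $(t_i)_{i\in\mathbb N}$ satisfy $0\le t_i\le 1$ for all $i$ and $\limsup_{i\to\infty}t_i<1$. Define bounded operators on $\ell_p$ by $Fx=\big(\sum_{i=1}^\infty f_ix_i,0,0,\dots\big)$ and $Tx=(0,t_1x_1,t_2x_2,\dots)$, and let $A=T+F$. Then $F$ is bounded and preserves $\ell_p^+=\{x\in\ell_p:x_i\ge0\ \forall i\}$, and $$R_0:=r\big(F(I-T)^{-1}\big)=f_1+\sum_{i=2}^\infty f_i\prod_{j=1}^{i-1}t_j,$$ and exactly one of the following holds: $R_0\ge r(A)>1$; $R_0=r(A)=1$; $R_0\le r(A)<1$.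
   Context: $r(\cdot)$ denotes the spectral radius (of the complexified operator). $\ell_p^+$ is a generating and normal cone in $\ell_p$. *)

From Stdlib Require Import Reals Lra.
From Coquelicot Require Import Coquelicot.
Open Scope R_scope.

(* a^p for a >= 0 and real p > 0, with the convention 0^p = 0 *)
Definition pw (a p : R) : R := if Rle_dec a 0 then 0 else Rpower a p.

(* Membership in l_p of a sequence, given the sequence of absolute values a. *)
Definition lp_mem (p : Rbar) (a : nat -> R) : Prop :=
  match p with
  | Finite p0 => ex_series (fun i => pw (a i) p0)
  | p_infty => exists M : R, forall i, a i <= M
  | m_infty => False
  end.

Definition lp_norm (p : Rbar) (a : nat -> R) : R :=
  match p with
  | Finite p0 => pw (Series (fun i => pw (a i) p0)) (/ p0)
  | p_infty => real (Lub_Rbar (fun y => exists i, y = a i))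
  | m_infty => 0
  end.

(* A (possibly nonlinear, but here always linear) map on sequences with values
   in V, with modulus nm, is a bounded operator on l_p(V). *)
Definition bounded_on {V : Type} (nm : V -> R) (p : Rbar)
    (A : (nat -> V) -> (nat -> V)) : Prop :=
  (forall x, lp_mem p (fun i => nm (x i)) -> lp_mem p (fun i => nm (A x i))) /\
  exists M : R, forall x, lp_mem p (fun i => nm (x i)) ->
    lp_norm p (fun i => nm (A x i)) <= M * lp_norm p (fun i => nm (x i)).

Definition in_lpR (p : Rbar) (x : nat -> R) := lp_mem p (fun i => Rabs (x i)).
Definition in_lpC (p : Rbar) (x : nat -> C) := lp_mem p (fun i => Cmod (x i)).

Definition in_spectrum (p : Rbar) (A : (nat -> C) -> (nat -> C)) (l : C) : Prop :=
  ~ exists S : (nat -> C) -> (nat -> C),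
      bounded_on Cmod p S /\
      (forall x, in_lpC p x ->
         (forall i, S (fun j => Cminus (Cmult l (x j)) (A x j)) i = x i) /\
         (forall i, Cminus (Cmult l (S x i)) (A (S x) i) = x i)).

Definition spec_rad (p : Rbar) (A : (nat -> C) -> (nat -> C)) : Rbar :=
  Lub_Rbar (fun r => exists l, in_spectrum p A l /\ r = Cmod l).

(* The operators of the statement (indices shifted: paper's index i is i-1 here). *)
Definition FR (f : nat -> R) (x : nat -> R) : nat -> R :=
  fun n => match n with O => Series (fun i => f i * x i) | S _ => 0 end.

Definition FC (f : nat -> R) (x : nat -> C) : nat -> C :=
  fun n => match n with
           | O => (Series (fun i => f i * fst (x i)), Series (fun i => f i * snd (x i)))
           | S _ => RtoC 0
           end.

Definition TC (t : nat -> R) (x : nat -> C) : nat -> C :=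
  fun n => match n with O => RtoC 0 | S k => Cmult (RtoC (t k)) (x k) end.

Definition AC (f t : nat -> R) (x : nat -> C) : nat -> C :=
  fun n => Cplus (TC t x n) (FC f x n).

Definition IminusTC (t : nat -> R) (x : nat -> C) : nat -> C :=
  fun n => Cminus (x n) (TC t x n).

Fixpoint tprod (t : nat -> R) (n : nat) : R :=
  match n with O => 1 | S k => tprod t k * t k end.

From Stdlib Require Import Reals.
From Coquelicot Require Import Coquelicot.
Open Scope R_scope.
From Stdlib Require Import Lra Lia FunctionalExtensionality Classical.

(** [A = T + F] with [F = e0 <f, .>] of rank one and [T] a weighted shift whose weights are
    eventually below some [th < 1], so [lam - T] has an explicit bounded inverse when
    [|lam| > th].  For such [lam] the Sherman--Morrison formula shows that [lam] is outside the
    spectrum of [A] unless [<f, (lam - T)^-1 e0> = 1].  The modulus of this number is at most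
    [G |lam|], where [G rho = sum_n f_n t_0 ... t_(n-1) / rho^(n+1)] is decreasing with
    [G 1 = R0], and the real roots of [G rho = 1] are eigenvalues.  Writing
    [G rho = P (1/rho) / rho] with a power series [P] converging beyond [1], continuity of
    [z P z] and the intermediate value theorem produce such roots on the same side of [1] as
    [R0], which pins [r(A)] there.  When [r(A)] may lie below [th], the first column of the
    resolvent at a real [l0 > r(A)] still decays like [t_0 ... t_(n-1) / l0^n], which extends
    the convergence of [P] far enough.  Finally [F (I - T)^-1] is again of rank one, with the
    single eigenvalue [<f, (I - T)^-1 e0> = R0]. *)

(** * Powers and series of nonnegative terms *)

Lemma pw_ge0 a p : 0 <= pw a p.
Proof. unfold pw. destruct (Rle_dec a 0). lra. left; apply exp_pos. Qed.

Lemma pw_0 p : pw 0 p = 0.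
Proof. unfold pw. destruct (Rle_dec 0 0); lra. Qed.

Lemma pw_pos a p : 0 < a -> pw a p = Rpower a p.
Proof. intros. unfold pw. destruct (Rle_dec a 0); lra. Qed.

Lemma pw_le a b p : 0 < p -> 0 <= a <= b -> pw a p <= pw b p.
Proof.
  intros Hp [Ha Hab]. destruct (Req_dec a 0) as [->|Ha0].
  - rewrite pw_0. apply pw_ge0.
  - rewrite !pw_pos by lra. apply Rle_Rpower_l; lra.
Qed.

Lemma pw_lt a b p : 0 < p -> 0 <= a < b -> pw a p < pw b p.
Proof.
  intros Hp [Ha Hab]. rewrite (pw_pos b) by lra. destruct (Req_dec a 0) as [->|Ha0].
  - rewrite pw_0. apply exp_pos.
  - rewrite pw_pos by lra. apply Rlt_Rpower_l; lra.
Qed.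

Lemma pw_mul a b p : 0 <= a -> 0 <= b -> pw (a * b) p = pw a p * pw b p.
Proof.
  intros Ha Hb. destruct (Req_dec a 0) as [->|Ha0]. { rewrite Rmult_0_l, pw_0; ring. }
  destruct (Req_dec b 0) as [->|Hb0]. { rewrite Rmult_0_r, pw_0; ring. }
  rewrite !pw_pos by (try apply Rmult_lt_0_compat; lra).
  symmetry; apply Rpower_mult_distr; lra.
Qed.

Lemma pw_pwK a p : p <> 0 -> 0 <= a -> pw (pw a p) (/ p) = a.
Proof.
  intros Hp Ha. destruct (Req_dec a 0) as [->|Ha0]. { rewrite !pw_0; auto. }
  rewrite (pw_pos a), pw_pos by (try apply exp_pos; lra).
  rewrite Rpower_mult, Rinv_r by auto. apply Rpower_1; lra.
Qed.

Lemma pw_pwVK a p : p <> 0 -> 0 <= a -> pw (pw a (/ p)) p = a.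
Proof.
  intros Hp Ha. rewrite <- (Rinv_inv p) at 2. apply pw_pwK; auto. apply Rinv_neq_0_compat; auto.
Qed.

Lemma pw_1r a : 0 <= a -> pw a 1 = a.
Proof.
  intros Ha. destruct (Req_dec a 0) as [->|Ha0]. { apply pw_0. }
  rewrite pw_pos by lra. apply Rpower_1; lra.
Qed.

Lemma pw_lt1 a p : 0 < p -> 0 <= a < 1 -> pw a p < 1.
Proof.
  intros. assert (E : pw 1 p = 1).
  { rewrite pw_pos by lra. unfold Rpower. rewrite ln_1, Rmult_0_r. apply exp_0. }
  rewrite <- E. apply pw_lt; lra.
Qed.

Lemma pw_ge1 a p : 0 <= p -> 1 <= a -> 1 <= pw a p.
Proof. intros. rewrite pw_pos, <- (Rpower_O a) by lra. apply Rle_Rpower; lra. Qed.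

Lemma pw_eq0 a p : 0 <= a -> pw a p = 0 -> a = 0.
Proof.
  intros Ha H. destruct (Req_dec a 0); auto. rewrite pw_pos in H by lra.
  pose proof (exp_pos (p * ln a)). unfold Rpower in H. lra.
Qed.

Lemma pw_Rmax a b p : 0 <= a -> 0 <= b -> pw (Rmax a b) p <= pw a p + pw b p.
Proof.
  intros. pose proof (pw_ge0 a p). pose proof (pw_ge0 b p).
  unfold Rmax. destruct (Rle_dec a b); lra.
Qed.

Lemma Series_const0 : Series (fun _ => 0) = 0.
Proof. rewrite (Series_ext _ (fun n => 0 * 0)) by (intros; ring). rewrite Series_scal_l; ring. Qed.

Lemma ex_series_Rscal c (a : nat -> R) : ex_series a -> ex_series (fun n => c * a n).
Proof. exact (ex_series_scal_l c a). Qed.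

Lemma ex_series_Rplus (a b : nat -> R) : ex_series a -> ex_series b -> ex_series (fun n => a n + b n).
Proof. exact (ex_series_plus a b). Qed.

Lemma ex_series_Rext (a b : nat -> R) : (forall n, a n = b n) -> ex_series a -> ex_series b.
Proof. exact (ex_series_ext a b). Qed.

Lemma ex_series_le_nonneg (a b : nat -> R) :
  (forall n, 0 <= a n <= b n) -> ex_series b -> ex_series a.
Proof.
  intros H Hb. apply (ex_series_le a b); auto. intros n.
  unfold norm; simpl; unfold abs; simpl. rewrite Rabs_pos_eq; apply H.
Qed.

Lemma ex_series_nonneg_bounded (a : nat -> R) (M : R) :
  (forall n, 0 <= a n) -> (forall N, sum_n a N <= M) -> ex_series a /\ Series a <= M.
Proof.
  intros Ha HM.
  assert (Hinc : forall n, sum_n a n <= sum_n a (S n)).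
  { intros n. rewrite sum_Sn. unfold plus; simpl. specialize (Ha (S n)). lra. }
  destruct (ex_finite_lim_seq_incr _ M Hinc HM) as [l Hl].
  split. { exists l; exact Hl. }
  rewrite (is_series_unique _ _ Hl).
  assert (Hle : Rbar_le l M) by (apply (is_lim_seq_le (sum_n a) (fun _ => M)); auto using is_lim_seq_const).
  exact Hle.
Qed.

Lemma ex_series_const0 : ex_series (fun _ => 0).
Proof.
  apply (ex_series_nonneg_bounded _ 0); intros; [lra|].
  rewrite sum_n_const. lra.
Qed.

Lemma sum_n_le_Series (a : nat -> R) N :
  (forall n, 0 <= a n) -> ex_series a -> sum_n a N <= Series a.
Proof.
  intros Ha [l Hl]. rewrite (is_series_unique _ _ Hl).
  assert (Hmono : forall n, (N <= n)%nat -> sum_n a N <= sum_n a n).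
  { intros n Hn. induction Hn; [lra|].
    rewrite sum_Sn. unfold plus; simpl. specialize (Ha (S m)). lra. }
  assert (Hle : Rbar_le (sum_n a N) l).
  { apply (is_lim_seq_le_loc (fun _ => sum_n a N) (sum_n a)); auto using is_lim_seq_const.
    exists N. exact Hmono. }
  exact Hle.
Qed.

Lemma Series_ge_term (a : nat -> R) N :
  (forall n, 0 <= a n) -> ex_series a -> a N <= Series a.
Proof.
  intros Ha Hs. eapply Rle_trans; [|apply (sum_n_le_Series a N); auto].
  destruct N. { rewrite sum_O; lra. }
  rewrite sum_Sn. unfold plus; simpl.
  assert (0 <= sum_n a N).
  { induction N. rewrite sum_O; auto. rewrite sum_Sn. unfold plus; simpl. specialize (Ha (S N)). lra. }
  lra.
Qed.

Lemma Series_nonneg (a : nat -> R) : (forall n, 0 <= a n) -> ex_series a -> 0 <= Series a.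
Proof. intros. eapply Rle_trans; [apply (H 0%nat) | apply Series_ge_term; auto]. Qed.

Lemma Series_nonneg_eq0 (a : nat -> R) n :
  (forall n, 0 <= a n) -> ex_series a -> Series a = 0 -> a n = 0.
Proof. intros. pose proof (Series_ge_term a n H H0). specialize (H n). lra. Qed.

Lemma Series_le_ex (a b : nat -> R) :
  (forall n, a n <= b n) -> ex_series a -> ex_series b -> Series a <= Series b.
Proof.
  intros Hab Ha Hb.
  assert (0 <= Series (fun n => b n - a n)).
  { apply Series_nonneg; [intros n; specialize (Hab n); lra | exact (ex_series_minus b a Hb Ha)]. }
  rewrite Series_minus in H by auto. lra.
Qed.

(** * The spaces l_p *)

Lemma exponent_cases p : Rbar_le 1 p -> (exists p0, p = Finite p0 /\ 1 <= p0) \/ p = p_infty.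
Proof. destruct p; simpl; intros H; try contradiction. left; eauto. right; auto. Qed.

Lemma lp_norm_infty_spec (a : nat -> R) : (forall i, 0 <= a i) -> lp_mem p_infty a ->
  (forall i, a i <= lp_norm p_infty a) /\
  (forall B, (forall i, a i <= B) -> lp_norm p_infty a <= B).
Proof.
  intros Ha [M HM]. unfold lp_norm.
  destruct (Lub_Rbar_correct (fun y => exists i, y = a i)) as [Hub Hlub].
  assert (Hbound : forall B, (forall i, a i <= B) -> is_ub_Rbar (fun y => exists i, y = a i) B).
  { intros B HB x [i ->]. simpl; auto. }
  destruct (Lub_Rbar (fun y => exists i, y = a i)) as [l| |].
  - split.
    + intros i. exact (Hub (a i) (ex_intro _ i eq_refl)).
    + intros B HB. exact (Hlub B (Hbound B HB)).
  - destruct (Hlub M (Hbound M HM)).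
  - destruct (Hub (a 0%nat) (ex_intro _ 0%nat eq_refl)).
Qed.

Lemma lp_norm_infty_le (a : nat -> R) B : (forall i, 0 <= a i) -> (forall i, a i <= B) ->
  lp_mem p_infty a /\ lp_norm p_infty a <= B.
Proof.
  intros Ha HB. assert (Hm : lp_mem p_infty a) by (exists B; exact HB).
  split; [exact Hm | apply (lp_norm_infty_spec a Ha Hm); exact HB].
Qed.

Lemma lp_norm_ge0 p a : Rbar_le 1 p -> (forall i, 0 <= a i) -> lp_mem p a -> 0 <= lp_norm p a.
Proof.
  intros Hp Ha Hm. destruct (exponent_cases p Hp) as [[p0 [-> Hp0]]| ->].
  - apply pw_ge0.
  - eapply Rle_trans; [apply (Ha 0%nat) | apply (lp_norm_infty_spec a Ha Hm)].
Qed.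

Lemma lp_dominated p a b c : Rbar_le 1 p -> 0 <= c -> (forall i, 0 <= b i) ->
  (forall i, 0 <= a i <= c * b i) -> lp_mem p b ->
  lp_mem p a /\ lp_norm p a <= c * lp_norm p b.
Proof.
  intros Hp Hc Hb Hab Hm. destruct (exponent_cases p Hp) as [[p0 [-> Hp0]]| ->].
  - simpl in *.
    assert (Hpt : forall i, 0 <= pw (a i) p0 <= pw c p0 * pw (b i) p0).
    { intros i. split; [apply pw_ge0|]. rewrite <- pw_mul by auto. apply pw_le; [lra | apply Hab]. }
    assert (Hex : ex_series (fun i => pw (a i) p0)).
    { eapply ex_series_le_nonneg; [apply Hpt | apply ex_series_Rscal; auto]. }
    assert (HSb : 0 <= Series (fun i => pw (b i) p0)) by (apply Series_nonneg; auto using pw_ge0).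
    split; auto.
    rewrite <- (pw_pwK c p0), <- pw_mul by (auto using pw_ge0; lra).
    apply pw_le; [apply Rinv_0_lt_compat; lra|].
    split; [apply Series_nonneg; auto using pw_ge0|].
    rewrite <- Series_scal_l. apply Series_le; auto. apply ex_series_Rscal; auto.
  - destruct (lp_norm_infty_spec b Hb Hm) as [Hb1 _].
    apply (lp_norm_infty_le a); [apply Hab|].
    intros i. eapply Rle_trans; [apply Hab | apply Rmult_le_compat_l; auto].
Qed.

Lemma lp_add p a b : Rbar_le 1 p -> (forall i, 0 <= a i) -> (forall i, 0 <= b i) ->
  lp_mem p a -> lp_mem p b ->
  lp_mem p (fun i => a i + b i) /\
  lp_norm p (fun i => a i + b i) <= 4 * (lp_norm p a + lp_norm p b).
Proof.
  intros Hp Ha Hb Hma Hmb.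
  pose proof (lp_norm_ge0 p a Hp Ha Hma). pose proof (lp_norm_ge0 p b Hp Hb Hmb).
  destruct (exponent_cases p Hp) as [[p0 [-> Hp0]]| ->].
  - simpl in *.
    (* [(a + b)^p <= (2 max a b)^p <= 2^p (a^p + b^p)], and likewise for the [1/p]-th roots *)
    assert (Hpt : forall i, 0 <= pw (a i + b i) p0 <= pw 2 p0 * (pw (a i) p0 + pw (b i) p0)).
    { intros i. specialize (Ha i). specialize (Hb i).
      assert (0 <= Rmax (a i) (b i)) by (apply (Rle_trans _ _ _ Ha), Rmax_l).
      split; [apply pw_ge0|].
      eapply Rle_trans.
      - apply (pw_le _ (2 * Rmax (a i) (b i))); [lra|].
        pose proof (Rmax_l (a i) (b i)). pose proof (Rmax_r (a i) (b i)). lra.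
      - rewrite pw_mul by lra. apply Rmult_le_compat_l; [apply pw_ge0 | apply pw_Rmax; auto]. }
    assert (Hex2 : ex_series (fun i => pw (a i) p0 + pw (b i) p0)) by (apply ex_series_Rplus; auto).
    assert (Hex : ex_series (fun i => pw (a i + b i) p0)).
    { eapply ex_series_le_nonneg; [apply Hpt | apply ex_series_Rscal; auto]. }
    split; auto.
    set (Sa := Series (fun i => pw (a i) p0)). set (Sb := Series (fun i => pw (b i) p0)).
    assert (HSa : 0 <= Sa) by (apply Series_nonneg; auto using pw_ge0).
    assert (HSb : 0 <= Sb) by (apply Series_nonneg; auto using pw_ge0).
    assert (HM : 0 <= Rmax Sa Sb) by (apply (Rle_trans _ _ _ HSa), Rmax_l).
    assert (Hs : Series (fun i => pw (a i + b i) p0) <= pw 2 p0 * (2 * Rmax Sa Sb)).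
    { eapply Rle_trans; [apply Series_le; [apply Hpt | apply ex_series_Rscal; auto]|].
      rewrite Series_scal_l. apply Rmult_le_compat_l; [apply pw_ge0|].
      rewrite Series_plus by auto. fold Sa Sb.
      pose proof (Rmax_l Sa Sb). pose proof (Rmax_r Sa Sb). lra. }
    eapply Rle_trans.
    { apply pw_le; [apply Rinv_0_lt_compat; lra|]. split; [apply Series_nonneg; auto using pw_ge0 | apply Hs]. }
    rewrite !pw_mul, pw_pwK by (try apply pw_ge0; lra).
    assert (H2 : pw 2 (/ p0) <= 2).
    { rewrite pw_pos by lra. rewrite <- (Rpower_1 2) at 2 by lra. apply Rle_Rpower; [lra|].
      rewrite <- Rinv_1. apply Rinv_le_contravar; lra. }
    pose proof (pw_Rmax Sa Sb (/ p0) HSa HSb). fold Sa Sb in H, H0.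
    assert (pw 2 (/ p0) * pw (Rmax Sa Sb) (/ p0) <= 2 * (pw Sa (/ p0) + pw Sb (/ p0)))
      by (apply Rmult_le_compat; auto using pw_ge0).
    lra.
  - destruct (lp_norm_infty_spec a Ha Hma) as [A1 _]. destruct (lp_norm_infty_spec b Hb Hmb) as [B1 _].
    destruct (lp_norm_infty_le (fun i => a i + b i) (lp_norm p_infty a + lp_norm p_infty b))
      as [Hm Hn].
    + intros i. specialize (Ha i). specialize (Hb i). lra.
    + intros i. specialize (A1 i). specialize (B1 i). lra.
    + split; [exact Hm | lra].
Qed.

Lemma lp_dominated2 p c a b K1 K2 : Rbar_le 1 p -> 0 <= K1 -> 0 <= K2 ->
  (forall i, 0 <= a i) -> (forall i, 0 <= b i) -> lp_mem p a -> lp_mem p b ->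
  (forall i, 0 <= c i <= K1 * a i + K2 * b i) ->
  lp_mem p c /\ lp_norm p c <= 4 * (K1 * lp_norm p a + K2 * lp_norm p b).
Proof.
  intros Hp HK1 HK2 Ha Hb Hma Hmb Hc.
  assert (Hn1 : forall i, 0 <= K1 * a i) by (intros; apply Rmult_le_pos; auto).
  assert (Hn2 : forall i, 0 <= K2 * b i) by (intros; apply Rmult_le_pos; auto).
  destruct (lp_dominated p (fun i => K1 * a i) a K1 Hp HK1 Ha) as [M1 N1]; auto.
  { intros i; split; [apply Hn1 | lra]. }
  destruct (lp_dominated p (fun i => K2 * b i) b K2 Hp HK2 Hb) as [M2 N2]; auto.
  { intros i; split; [apply Hn2 | lra]. }
  destruct (lp_add p _ _ Hp Hn1 Hn2 M1 M2) as [M3 N3].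
  destruct (lp_dominated p c _ 1 Hp ltac:(lra) (fun i => Rplus_le_le_0_compat _ _ (Hn1 i) (Hn2 i)))
    as [M4 N4]; auto.
  { intros i. rewrite Rmult_1_l. apply Hc. }
  split; auto. lra.
Qed.

Definition shift (a : nat -> R) : nat -> R := fun n => match n with O => 0 | S k => a k end.

Lemma lp_shift p a : Rbar_le 1 p -> (forall i, 0 <= a i) -> lp_mem p a ->
  lp_mem p (shift a) /\ lp_norm p (shift a) <= lp_norm p a.
Proof.
  intros Hp Ha Hm. destruct (exponent_cases p Hp) as [[p0 [-> Hp0]]| ->].
  - simpl in *.
    assert (Hex : ex_series (fun i => pw (shift a i) p0)) by (apply ex_series_incr_1; exact Hm).
    split; auto. rewrite Series_incr_1 by auto. simpl. rewrite pw_0, Rplus_0_l. lra.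
  - destruct (lp_norm_infty_spec a Ha Hm) as [A1 _].
    apply lp_norm_infty_le.
    + intros [|i]; simpl; auto; lra.
    + intros [|i]; simpl; auto. eapply Rle_trans; [apply (Ha 0%nat) | apply A1].
Qed.

Definition head (c : R) : nat -> R := fun n => match n with O => c | S _ => 0 end.

Lemma lp_head p c : Rbar_le 1 p -> 0 <= c -> lp_mem p (head c) /\ lp_norm p (head c) <= c.
Proof.
  intros Hp Hc. destruct (exponent_cases p Hp) as [[p0 [-> Hp0]]| ->].
  - simpl in *.
    assert (Htail : forall i, pw (head c (S i)) p0 = 0) by (intros; apply pw_0).
    assert (Hex : ex_series (fun i => pw (head c i) p0)).
    { apply ex_series_incr_1. eapply ex_series_ext; [|apply ex_series_const0]. intros; symmetry; apply Htail. }
    split; auto. rewrite Series_incr_1 by auto.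
    rewrite (Series_ext _ _ Htail), Series_const0, Rplus_0_r. simpl.
    rewrite pw_pwK by lra. lra.
  - apply lp_norm_infty_le; intros [|i]; simpl; lra.
Qed.

(* [geom_conv r a n = sum_(k <= n) r^(n-k) a k] *)
Fixpoint geom_conv (r : R) (a : nat -> R) (n : nat) : R :=
  match n with O => a O | S k => r * geom_conv r a k + a (S k) end.

Lemma geom_conv_ge0 r a n : 0 <= r -> (forall i, 0 <= a i) -> 0 <= geom_conv r a n.
Proof. intros Hr Ha. induction n; simpl; auto. specialize (Ha (S n)). nra. Qed.

(* Split according to whether [x] or [r w] dominates, with threshold [(1 - r)/2 * w]. *)
Lemma pw_affine_le p0 r w x : 1 <= p0 -> 0 <= r < 1 -> 0 <= w -> 0 <= x ->
  pw (r * w + x) p0 <= pw ((1 + r) / 2) p0 * pw w p0 + pw (r / ((1 - r) / 2) + 1) p0 * pw x p0.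
Proof.
  intros Hp Hr Hw Hx. set (d := (1 - r) / 2).
  assert (Hd : 0 < d) by (unfold d; lra).
  assert (Hrd : 0 <= r / d) by (apply Rmult_le_pos; [lra | left; apply Rinv_0_lt_compat; auto]).
  pose proof (pw_ge0 ((1 + r) / 2) p0). pose proof (pw_ge0 w p0).
  pose proof (pw_ge0 (r / d + 1) p0). pose proof (pw_ge0 x p0).
  destruct (Rle_dec x (d * w)).
  - assert (pw (r * w + x) p0 <= pw ((1 + r) / 2) p0 * pw w p0).
    { rewrite <- pw_mul by lra. apply pw_le; [lra|]. unfold d in r0. nra. }
    nra.
  - assert (Hwx : w <= x / d).
    { apply Rmult_le_reg_r with d; auto. unfold Rdiv. rewrite Rmult_assoc, Rinv_l by lra. lra. }
    assert (pw (r * w + x) p0 <= pw (r / d + 1) p0 * pw x p0).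
    { rewrite <- pw_mul by lra. apply pw_le; [lra|]. split; [nra|].
      assert (r * w <= r / d * x).
      { unfold Rdiv in *. rewrite Rmult_assoc. apply Rmult_le_compat_l; lra. }
      lra. }
    nra.
Qed.

Lemma lp_geom_conv p r : Rbar_le 1 p -> 0 <= r < 1 ->
  exists K, 0 <= K /\ forall a, (forall i, 0 <= a i) -> lp_mem p a ->
    lp_mem p (geom_conv r a) /\ lp_norm p (geom_conv r a) <= K * lp_norm p a.
Proof.
  intros Hp Hr. destruct (exponent_cases p Hp) as [[p0 [-> Hp0]]| ->].
  - set (rho := pw ((1 + r) / 2) p0). set (c := pw (r / ((1 - r) / 2) + 1) p0).
    assert (Hrho : rho < 1) by (apply pw_lt1; lra).
    assert (Hrho0 : 0 <= rho) by apply pw_ge0.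
    assert (Hc : 1 <= c).
    { apply pw_ge1; [lra|].
      assert (0 <= r / ((1 - r) / 2)) by (apply Rmult_le_pos; [lra | left; apply Rinv_0_lt_compat; lra]).
      lra. }
    exists (pw (c / (1 - rho)) (/ p0)). split; [apply pw_ge0|].
    intros a Ha Hm. simpl in *.
    set (Sa := Series (fun i => pw (a i) p0)).
    assert (Hind : forall N, (1 - rho) * sum_n (fun n => pw (geom_conv r a n) p0) N
                             + rho * pw (geom_conv r a N) p0
                             <= c * sum_n (fun n => pw (a n) p0) N).
    { induction N.
      - rewrite !sum_O. simpl. pose proof (pw_ge0 (a 0%nat) p0). nra.
      - rewrite !sum_Sn. unfold plus; simpl.
        pose proof (pw_affine_le p0 r (geom_conv r a N) (a (S N)) Hp0 Hr
                      (geom_conv_ge0 r a N (proj1 Hr) Ha) (Ha (S N))).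
        fold rho c in H. pose proof (pw_ge0 (r * geom_conv r a N + a (S N)) p0). nra. }
    assert (Hb : forall N, sum_n (fun n => pw (geom_conv r a n) p0) N <= c / (1 - rho) * Sa).
    { intros N. specialize (Hind N).
      pose proof (sum_n_le_Series (fun n => pw (a n) p0) N (fun n => pw_ge0 _ _) Hm).
      fold Sa in H. pose proof (pw_ge0 (geom_conv r a N) p0).
      apply Rmult_le_reg_l with (1 - rho); [lra|].
      replace ((1 - rho) * (c / (1 - rho) * Sa)) with (c * Sa) by (field; lra).
      assert (c * sum_n (fun n => pw (a n) p0) N <= c * Sa) by (apply Rmult_le_compat_l; lra).
      assert (0 <= rho * pw (geom_conv r a N) p0) by (apply Rmult_le_pos; lra). lra. }
    destruct (ex_series_nonneg_bounded _ _ (fun n => pw_ge0 _ _) Hb) as [Hex HS].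
    split; auto.
    rewrite <- pw_mul.
    + apply pw_le; [apply Rinv_0_lt_compat; lra|]. split; auto. apply Series_nonneg; auto using pw_ge0.
    + apply Rmult_le_pos; [lra | left; apply Rinv_0_lt_compat; lra].
    + apply Series_nonneg; auto using pw_ge0.
  - exists (/ (1 - r)). split; [left; apply Rinv_0_lt_compat; lra|].
    intros a Ha Hm. destruct (lp_norm_infty_spec a Ha Hm) as [A1 _].
    pose proof (lp_norm_ge0 p_infty a ltac:(simpl; auto) Ha Hm) as Hn.
    apply lp_norm_infty_le; [intros; apply geom_conv_ge0; auto; lra|].
    assert (1 <= / (1 - r)) by (rewrite <- Rinv_1; apply Rinv_le_contravar; lra).
    intros n; induction n; cbn [geom_conv].
    + eapply Rle_trans; [apply A1 | nra].
    + specialize (A1 (S n)).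
      replace (/ (1 - r) * lp_norm p_infty a)
        with (r * (/ (1 - r) * lp_norm p_infty a) + lp_norm p_infty a) by (field; lra).
      nra.
Qed.

(** * Hölder's inequality *)

Lemma conjugate_exponents_cases p q : Rbar_le 1 p -> Rbar_le 1 q ->
  Rbar_plus (Rbar_inv p) (Rbar_inv q) = Finite 1 ->
  (exists p0 q0, p = Finite p0 /\ q = Finite q0 /\ 1 < p0 /\ 1 < q0 /\ / p0 + / q0 = 1) \/
  (p = Finite 1 /\ q = p_infty) \/ (p = p_infty /\ q = Finite 1).
Proof.
  intros Hp Hq H.
  destruct p as [p0| |]; destruct q as [q0| |]; simpl in *; try contradiction;
    injection H; intros E.
  - left. exists p0, q0.
    assert (0 < / p0) by (apply Rinv_0_lt_compat; lra).
    assert (0 < / q0) by (apply Rinv_0_lt_compat; lra).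
    repeat split; auto.
    + destruct (Req_dec p0 1) as [->|]; [rewrite Rinv_1 in E; lra | lra].
    + destruct (Req_dec q0 1) as [->|]; [rewrite Rinv_1 in E; lra | lra].
  - right; left. split; auto. f_equal. rewrite Rplus_0_r in E. rewrite <- (Rinv_inv p0), E. apply Rinv_1.
  - right; right. split; auto. f_equal. rewrite Rplus_0_l in E. rewrite <- (Rinv_inv q0), E. apply Rinv_1.
  - lra.
Qed.

Lemma young_dominant x y p0 q0 : 0 < x -> 0 < y -> 0 < q0 -> Rpower x q0 <= Rpower y p0 ->
  p0 * / q0 = p0 - 1 -> x * y <= Rpower y p0.
Proof.
  intros Hx Hy Hq H E.
  assert (Hx' : x <= Rpower y (p0 * / q0)).
  { rewrite <- (Rpower_1 x) by auto. rewrite <- (Rinv_r q0) by lra.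
    rewrite <- Rpower_mult, <- (Rpower_mult y). apply Rle_Rpower_l.
    - left; apply Rinv_0_lt_compat; auto.
    - split; auto. apply exp_pos. }
  rewrite E in Hx'.
  replace (Rpower y p0) with (Rpower y (p0 - 1) * Rpower y 1)
    by (rewrite <- Rpower_plus; f_equal; ring).
  rewrite Rpower_1 by auto. apply Rmult_le_compat_r; lra.
Qed.

Lemma young x y p0 q0 : 1 < p0 -> 1 < q0 -> / p0 + / q0 = 1 -> 0 <= x -> 0 <= y ->
  x * y <= pw x q0 + pw y p0.
Proof.
  intros Hp Hq E Hx Hy. pose proof (pw_ge0 x q0). pose proof (pw_ge0 y p0).
  destruct (Req_dec x 0) as [->|]; [nra|]. destruct (Req_dec y 0) as [->|]; [nra|].
  rewrite !pw_pos by lra.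
  assert (E1 : p0 * / q0 = p0 - 1) by (replace (/ q0) with (1 - / p0) by lra; field; lra).
  assert (E2 : q0 * / p0 = q0 - 1) by (replace (/ p0) with (1 - / q0) by lra; field; lra).
  assert (0 < Rpower x q0) by apply exp_pos. assert (0 < Rpower y p0) by apply exp_pos.
  destruct (Rle_dec (Rpower x q0) (Rpower y p0)) as [Hle|Hlt].
  - pose proof (young_dominant x y p0 q0 ltac:(lra) ltac:(lra) ltac:(lra) Hle E1). lra.
  - pose proof (young_dominant y x q0 p0 ltac:(lra) ltac:(lra) ltac:(lra) ltac:(lra) E2). lra.
Qed.

Definition pairing_bounded p (f : nat -> R) :=
  exists C, 0 <= C /\ forall b, (forall i, 0 <= b i) -> lp_mem p b ->
    ex_series (fun i => f i * b i) /\ Series (fun i => f i * b i) <= C * lp_norm p b.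

Lemma holder_1_infty (a b : nat -> R) : (forall i, 0 <= a i) -> (forall i, 0 <= b i) ->
  ex_series a -> lp_mem p_infty b ->
  ex_series (fun i => a i * b i) /\ Series (fun i => a i * b i) <= lp_norm p_infty b * Series a.
Proof.
  intros Ha Hb Hma Hmb. destruct (lp_norm_infty_spec b Hb Hmb) as [B1 _].
  assert (Hpt : forall i, 0 <= a i * b i <= lp_norm p_infty b * a i).
  { intros i. split; [apply Rmult_le_pos; auto|]. rewrite Rmult_comm. apply Rmult_le_compat_r; auto. }
  split; [apply (ex_series_le_nonneg _ _ Hpt), ex_series_Rscal; auto|].
  rewrite <- Series_scal_l. apply Series_le; auto. apply ex_series_Rscal; auto.
Qed.

Lemma lp_mem_1 (a : nat -> R) : (forall i, 0 <= a i) ->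
  lp_mem (Finite 1) a -> ex_series a /\ lp_norm (Finite 1) a = Series a.
Proof.
  intros Ha Hm. simpl in *.
  assert (E : forall i, pw (a i) 1 = a i) by (intros; apply pw_1r; auto).
  rewrite (Series_ext _ _ E), Rinv_1, pw_1r by (apply Series_nonneg; auto; apply (ex_series_ext _ _ E Hm)).
  split; auto. apply (ex_series_ext _ _ E Hm).
Qed.

Lemma holder p q a : Rbar_le 1 p -> Rbar_le 1 q -> Rbar_plus (Rbar_inv p) (Rbar_inv q) = Finite 1 ->
  (forall i, 0 <= a i) -> lp_mem q a -> pairing_bounded p a.
Proof.
  intros Hp Hq Hpq Ha Hma.
  destruct (conjugate_exponents_cases p q Hp Hq Hpq)
    as [[p0 [q0 [-> [-> [Hp0 [Hq0 E]]]]]] | [[-> ->]|[-> ->]]].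
  - simpl in Hma. set (Sa := Series (fun i => pw (a i) q0)).
    assert (HSa : 0 <= Sa) by (apply Series_nonneg; auto using pw_ge0).
    exists (Sa + 1). split; [lra|].
    intros b Hb Hmb. simpl in *. set (S := Series (fun i => pw (b i) p0)).
    assert (HS : 0 <= S) by (apply Series_nonneg; auto using pw_ge0).
    destruct (Req_dec S 0) as [HS0|HS0].
    + assert (E0 : forall i, a i * b i = 0).
      { intros i. rewrite (pw_eq0 (b i) p0); [ring | auto|].
        apply (Series_nonneg_eq0 (fun i => pw (b i) p0)); auto using pw_ge0. }
      rewrite (Series_ext _ _ E0), Series_const0.
      split; [apply (ex_series_ext (fun _ => 0)); auto using ex_series_const0|].
      apply Rmult_le_pos; [lra | apply pw_ge0].
    + (* Young's inequality applied to [a i] and [b i / N], with [N] the l_p norm of [b] *)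
      set (N := pw S (/ p0)).
      assert (HN : 0 < N) by (unfold N; rewrite pw_pos by lra; apply exp_pos).
      assert (HNS : pw N p0 = S) by (apply pw_pwVK; lra).
      assert (Hpt : forall i, 0 <= a i * b i <= N * pw (a i) q0 + (N / S) * pw (b i) p0).
      { intros i. split; [apply Rmult_le_pos; auto|].
        assert (0 <= b i / N) by (apply Rmult_le_pos; auto; left; apply Rinv_0_lt_compat; auto).
        pose proof (young (a i) (b i / N) p0 q0 Hp0 Hq0 E (Ha i) H) as Y.
        assert (Hpb : pw (b i) p0 = pw (b i / N) p0 * S)
          by (rewrite <- HNS, <- pw_mul by lra; f_equal; field; lra).
        rewrite Hpb. replace (a i * b i) with (N * (a i * (b i / N))) by (field; lra).
        replace (N / S * (pw (b i / N) p0 * S)) with (N * pw (b i / N) p0) by (field; lra).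
        nra. }
      assert (Hex : ex_series (fun i => N * pw (a i) q0 + N / S * pw (b i) p0))
        by (apply ex_series_Rplus; apply ex_series_Rscal; auto).
      split; [apply (ex_series_le_nonneg _ _ Hpt Hex)|].
      eapply Rle_trans; [apply (Series_le _ _ Hpt Hex)|].
      rewrite Series_plus by (apply ex_series_Rscal; auto). rewrite !Series_scal_l. fold Sa S N.
      replace (N / S * S) with N by (field; lra). nra.
  - exists (lp_norm p_infty a). split; [apply lp_norm_ge0; simpl; auto|].
    intros b Hb Hmb. destruct (lp_mem_1 b Hb Hmb) as [Hb1 ->].
    destruct (holder_1_infty b a Hb Ha Hb1 Hma) as [Hex Hle].
    split; [apply (ex_series_ext _ _ (fun i => Rmult_comm _ _) Hex)|].
    rewrite (Series_ext _ _ (fun i => Rmult_comm _ _)). exact Hle.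
  - destruct (lp_mem_1 a Ha Hma) as [Ha1 _].
    exists (Series a). split; [apply Series_nonneg; auto|].
    intros b Hb Hmb. destruct (holder_1_infty a b Ha Hb Ha1 Hmb) as [Hex Hle].
    split; auto. lra.
Qed.

(** * Complex l_p and the functional [x |-> sum_i f_i x_i] *)

Lemma Cmod_RtoC_nonneg x : 0 <= x -> Cmod (RtoC x) = x.
Proof. intros. rewrite Cmod_R. apply Rabs_pos_eq; auto. Qed.

Lemma RtoC_neq0 x : x <> 0 -> RtoC x <> RtoC 0.
Proof. intros Hx E. apply Hx. apply (f_equal fst) in E. exact E. Qed.

Lemma Series_comb4 (u1 u2 u3 u4 : nat -> R) c1 c2 c3 c4 :
  ex_series u1 -> ex_series u2 -> ex_series u3 -> ex_series u4 ->
  Series (fun i => c1 * u1 i + c2 * u2 i + c3 * u3 i + c4 * u4 i) =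
  c1 * Series u1 + c2 * Series u2 + c3 * Series u3 + c4 * Series u4.
Proof.
  intros H1 H2 H3 H4.
  rewrite !Series_plus, !Series_scal_l; auto;
    repeat apply ex_series_Rplus; apply ex_series_Rscal; auto.
Qed.

Definition pairing (f : nat -> R) (x : nat -> C) : C :=
  (Series (fun i => f i * fst (x i)), Series (fun i => f i * snd (x i))).

Lemma pairing_zero f : pairing f (fun _ => RtoC 0) = RtoC 0.
Proof.
  unfold pairing; simpl. rewrite !(Series_ext _ (fun _ => 0)) by (intros; ring).
  rewrite Series_const0. reflexivity.
Qed.

Lemma unit_dot_le_Cmod u1 u2 a b : u1 * u1 + u2 * u2 = 1 -> u1 * a + u2 * b <= Cmod (a, b).
Proof.
  intros H. unfold Cmod; cbn [fst snd]. destruct (Rle_dec (u1 * a + u2 * b) 0).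
  - pose proof (sqrt_pos (a ^ 2 + b ^ 2)). lra.
  - rewrite <- (sqrt_pow2 (u1 * a + u2 * b)) by lra. apply sqrt_le_1_alt.
    assert (0 <= (u1 * b - u2 * a) ^ 2) by apply pow2_ge_0.
    assert (Eq : (u1 * a + u2 * b) ^ 2 + (u1 * b - u2 * a) ^ 2 = (u1 * u1 + u2 * u2) * (a ^ 2 + b ^ 2))
      by ring.
    rewrite H in Eq. lra.
Qed.

Section Pairing.
Variables (p : Rbar) (f : nat -> R).
Hypothesis Hf0 : forall i, 0 <= f i.
Hypothesis Hf : pairing_bounded p f.

Lemma pairing_ex x : in_lpC p x ->
  ex_series (fun i => f i * Cmod (x i)) /\
  ex_series (fun i => f i * fst (x i)) /\ ex_series (fun i => f i * snd (x i)).
Proof.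
  intros Hx. destruct Hf as [K [HK H]]. destruct (H _ (fun i => Cmod_ge_0 _) Hx) as [Hex _].
  assert (Hcoord : forall c : Complex.C -> R, (forall z, Rabs (c z) <= Cmod z) ->
            ex_series (fun i => f i * c (x i))).
  { intros c Hc. apply ex_series_Rabs. apply (ex_series_le_nonneg _ (fun i => f i * Cmod (x i))); auto.
    intros i; split; [apply Rabs_pos|].
    rewrite Rabs_mult, (Rabs_pos_eq (f i)) by auto. apply Rmult_le_compat_l; auto. }
  split; [|split]; auto; apply Hcoord; intros z;
    (eapply Rle_trans; [|apply Rmax_Cmod]); [apply Rmax_l | apply Rmax_r].
Qed.

Lemma pairing_lin x y a b : in_lpC p x -> in_lpC p y ->
  pairing f (fun n => (a * x n + b * y n)%C) = (a * pairing f x + b * pairing f y)%C.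
Proof.
  intros Hx Hy. destruct (pairing_ex x Hx) as [_ [X1 X2]]. destruct (pairing_ex y Hy) as [_ [Y1 Y2]].
  unfold pairing. destruct a as [a1 a2], b as [b1 b2].
  apply injective_projections; simpl.
  - rewrite (Series_ext _ (fun i => a1 * (f i * fst (x i)) + (- a2) * (f i * snd (x i))
                                   + b1 * (f i * fst (y i)) + (- b2) * (f i * snd (y i))))
      by (intros; simpl; ring).
    rewrite Series_comb4 by auto. ring.
  - rewrite (Series_ext _ (fun i => a1 * (f i * snd (x i)) + a2 * (f i * fst (x i))
                                   + b1 * (f i * snd (y i)) + b2 * (f i * fst (y i))))
      by (intros; simpl; ring).
    rewrite Series_comb4 by auto. ring.
Qed.

Lemma Cmod_pairing_le x : in_lpC p x -> Cmod (pairing f x) <= Series (fun i => f i * Cmod (x i)).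
Proof.
  intros Hx. destruct (pairing_ex x Hx) as [XM [X1 X2]].
  set (w := pairing f x). set (m := Cmod w).
  destruct (Req_dec m 0) as [H0|H0].
  { rewrite H0. apply Series_nonneg; auto. intros; apply Rmult_le_pos; auto using Cmod_ge_0. }
  assert (Hm : 0 < m) by (pose proof (Cmod_ge_0 w); unfold m in *; lra).
  assert (Hmm : m * m = fst w ^ 2 + snd w ^ 2).
  { unfold m, Cmod. rewrite sqrt_sqrt; auto. pose proof (pow2_ge_0 (fst w)); pose proof (pow2_ge_0 (snd w)); lra. }
  (* project every [x i] on the direction of [w] *)
  set (u1 := fst w / m). set (u2 := snd w / m).
  assert (Hu : u1 * u1 + u2 * u2 = 1).
  { replace (u1 * u1 + u2 * u2) with ((fst w ^ 2 + snd w ^ 2) / (m * m)) by (unfold u1, u2; field; lra).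
    rewrite <- Hmm. field. lra. }
  assert (Hex : ex_series (fun i => u1 * (f i * fst (x i)) + u2 * (f i * snd (x i))))
    by (apply ex_series_Rplus; apply ex_series_Rscal; auto).
  replace m with (Series (fun i => u1 * (f i * fst (x i)) + u2 * (f i * snd (x i)))).
  - apply Series_le_ex; auto. intros i.
    pose proof (unit_dot_le_Cmod u1 u2 (fst (x i)) (snd (x i)) Hu).
    rewrite <- surjective_pairing in H. pose proof (Hf0 i). nra.
  - rewrite Series_plus, !Series_scal_l by (apply ex_series_Rscal; auto).
    change (u1 * fst w + u2 * snd w = m). unfold u1, u2.
    apply Rmult_eq_reg_r with m; [|lra]. rewrite Hmm. field. lra.
Qed.

Lemma pairing_bound : exists C, 0 <= C /\
  forall x, in_lpC p x -> Cmod (pairing f x) <= C * lp_norm p (fun i => Cmod (x i)).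
Proof.
  destruct Hf as [C [HC H]]. exists C. split; auto. intros x Hx.
  eapply Rle_trans; [apply Cmod_pairing_le; auto | apply (H _ (fun i => Cmod_ge_0 _) Hx)].
Qed.

End Pairing.

Lemma lpC_comb p x y a b : Rbar_le 1 p -> in_lpC p x -> in_lpC p y ->
  in_lpC p (fun n => (a * x n + b * y n)%C) /\
  lp_norm p (fun n => Cmod (a * x n + b * y n)%C) <=
    4 * (Cmod a * lp_norm p (fun n => Cmod (x n)) + Cmod b * lp_norm p (fun n => Cmod (y n))).
Proof.
  intros Hp Hx Hy.
  apply (lp_dominated2 p _ (fun n => Cmod (x n)) (fun n => Cmod (y n)) (Cmod a) (Cmod b));
    auto using Cmod_ge_0.
  intros i. split; [apply Cmod_ge_0|]. eapply Rle_trans; [apply Cmod_triangle|]. rewrite !Cmod_mult. lra.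
Qed.

Definition unitC (M : nat) : nat -> C := fun n => if Nat.eqb n M then RtoC 1 else RtoC 0.

Lemma unitC_lp p M : Rbar_le 1 p -> in_lpC p (unitC M).
Proof.
  intros Hp. unfold in_lpC. induction M as [|M IH].
  - assert (E : (fun i => Cmod (unitC 0 i)) = head 1).
    { apply functional_extensionality. intros [|n]; unfold unitC, head; cbn [Nat.eqb];
      rewrite Cmod_R; [apply Rabs_R1 | apply Rabs_R0]. }
    rewrite E. exact (proj1 (lp_head p 1 Hp ltac:(lra))).
  - destruct (lp_shift p _ Hp (fun i => Cmod_ge_0 _) IH) as [H _].
    apply (lp_dominated p _ (shift (fun i => Cmod (unitC M i))) 1 Hp ltac:(lra)); auto.
    + intros [|i]; simpl; [lra | apply Cmod_ge_0].
    + intros [|i]; unfold unitC, shift; simpl; rewrite ?Cmod_0; [lra|].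
      destruct (Nat.eqb i M); rewrite ?Cmod_0, ?Cmod_1; lra.
Qed.

Lemma zero_lp p : Rbar_le 1 p -> in_lpC p (fun _ => RtoC 0).
Proof.
  intros Hp. apply (lp_dominated p _ (fun i => Cmod (unitC 0 i)) 0 Hp ltac:(lra) (fun i => Cmod_ge_0 _)).
  - intros i. rewrite Cmod_0. lra.
  - apply unitC_lp; auto.
Qed.

(** * The resolvent of the weighted shift *)

(* [(lam I - T)^-1], solved row by row from the lower bidiagonal system *)
Fixpoint resT (t : nat -> R) (lam : C) (x : nat -> C) (n : nat) : C :=
  match n with
  | O => (x O / lam)%C
  | S k => ((x (S k) + RtoC (t k) * resT t lam x k) / lam)%C
  end.

Lemma resT_left t lam x n : lam <> RtoC 0 -> (lam * resT t lam x n - TC t (resT t lam x) n)%C = x n.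
Proof. intros H. destruct n; simpl; field; auto. Qed.

Lemma resT_right t lam y n : lam <> RtoC 0 -> resT t lam (fun j => lam * y j - TC t y j)%C n = y n.
Proof. intros H. induction n; simpl; [|rewrite IHn]; field; auto. Qed.

Lemma resT_lin t lam x y a b n : lam <> RtoC 0 ->
  resT t lam (fun j => a * x j + b * y j)%C n = (a * resT t lam x n + b * resT t lam y n)%C.
Proof. intros H. induction n; simpl; [|rewrite IHn]; field; auto. Qed.

Lemma TC_lin t x y a b n : TC t (fun j => a * x j + b * y j)%C n = (a * TC t x n + b * TC t y n)%C.
Proof. destruct n; simpl; ring. Qed.

Section ShiftResolvent.
Variables (t : nat -> R) (th : R) (N : nat) (lam : C).
Hypothesis Ht : forall n, 0 <= t n <= 1.
Hypothesis Hth : 0 < th < 1.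
Hypothesis HN : forall n, (N <= n)%nat -> t n <= th.
Hypothesis Hlam : th < Cmod lam.

(* The first [N] weights are only bounded by [1 <= 1/th]; the factor [(/th)^N] absorbs them. *)
Lemma resT_Cmod_le x n :
  Cmod (resT t lam x n)
  <= / Cmod lam * (/ th) ^ (Nat.min n N) * geom_conv (th / Cmod lam) (fun i => Cmod (x i)) n.
Proof.
  set (L := Cmod lam). assert (HL : 0 < L) by (unfold L; lra).
  assert (Hl0 : lam <> RtoC 0) by (apply Cmod_gt_0; auto).
  set (r := th / L).
  assert (Hr : 0 <= r) by (apply Rmult_le_pos; [lra | left; apply Rinv_0_lt_compat; auto]).
  assert (Hith : 1 <= / th) by (rewrite <- Rinv_1; apply Rinv_le_contravar; lra).
  induction n.
  - simpl. rewrite Cmod_div by auto. fold L. right. field. lra.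
  - cbn [resT geom_conv]. rewrite Cmod_div by auto. fold L.
    pose proof (geom_conv_ge0 r (fun i => Cmod (x i)) n Hr (fun i => Cmod_ge_0 _)) as Hw.
    set (w := geom_conv r (fun i => Cmod (x i)) n) in *.
    set (Q := (/ th) ^ Nat.min n N) in *. set (Q' := (/ th) ^ Nat.min (S n) N).
    assert (HQ1 : 1 <= Q') by (apply pow_R1_Rle; auto).
    assert (HQ0 : 0 <= Q) by (apply pow_le; lra).
    assert (HQQ : t n * Q <= th * Q').
    { pose proof (Ht n). unfold Q', Q in *. destruct (Nat.lt_ge_cases n N) as [Hn|Hn].
      - replace (Nat.min (S n) N) with (S (Nat.min n N)) by lia. simpl.
        replace (th * (/ th * (/ th) ^ Nat.min n N)) with ((/ th) ^ Nat.min n N) by (field; lra).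
        nra.
      - replace (Nat.min (S n) N) with N by lia. replace (Nat.min n N) with N by lia.
        pose proof (HN n Hn). pose proof (pow_le (/ th) N ltac:(lra)). nra. }
    assert (Htr : Cmod (x (S n) + RtoC (t n) * resT t lam x n)
                  <= Cmod (x (S n)) + t n * Cmod (resT t lam x n)).
    { eapply Rle_trans; [apply Cmod_triangle|]. rewrite Cmod_mult, Cmod_RtoC_nonneg by apply Ht. lra. }
    assert (H1 : t n * Cmod (resT t lam x n) <= t n * (/ L * Q * w))
      by (apply Rmult_le_compat_l; [apply Ht | auto]).
    assert (H2 : t n * (/ L * Q * w) <= Q' * (r * w)).
    { unfold r. replace (t n * (/ L * Q * w)) with ((t n * Q) * (w / L)) by (field; lra).
      replace (Q' * (th / L * w)) with ((th * Q') * (w / L)) by (field; lra).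
      apply Rmult_le_compat_r; auto. apply Rmult_le_pos; [lra | left; apply Rinv_0_lt_compat; auto]. }
    assert (H3 : Cmod (x (S n)) <= Q' * Cmod (x (S n))) by (pose proof (Cmod_ge_0 (x (S n))); nra).
    unfold Rdiv. replace (/ L * Q' * (r * w + Cmod (x (S n))))
      with ((Q' * (r * w) + Q' * Cmod (x (S n))) * / L) by ring.
    apply Rmult_le_compat_r; [left; apply Rinv_0_lt_compat; auto | lra].
Qed.

Lemma resT_bounded p : Rbar_le 1 p -> bounded_on Cmod p (resT t lam).
Proof.
  intros Hp. set (L := Cmod lam). assert (HlL : th < L) by exact Hlam.
  assert (HL : 0 < L) by lra. set (r := th / L).
  assert (Hr : 0 <= r < 1).
  { unfold r. split; [apply Rmult_le_pos; [lra | left; apply Rinv_0_lt_compat; auto]|].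
    apply Rmult_lt_reg_r with L; auto. unfold Rdiv. rewrite Rmult_assoc, Rinv_l by lra. lra. }
  destruct (lp_geom_conv p r Hp Hr) as [K [HK HKc]].
  set (D := / L * (/ th) ^ N).
  assert (HD : 0 <= D) by (apply Rmult_le_pos; [| apply pow_le]; left; apply Rinv_0_lt_compat; lra).
  assert (Hdom : forall x n, 0 <= Cmod (resT t lam x n) <= D * geom_conv r (fun i => Cmod (x i)) n).
  { intros x n. split; [apply Cmod_ge_0|]. eapply Rle_trans; [apply resT_Cmod_le|].
    apply Rmult_le_compat_r; [apply geom_conv_ge0; [lra | intros; apply Cmod_ge_0]|].
    apply Rmult_le_compat_l; [left; apply Rinv_0_lt_compat; auto|].
    apply Rle_pow; [rewrite <- Rinv_1; apply Rinv_le_contravar; lra | lia]. }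
  assert (Hres : forall x, in_lpC p x ->
            lp_mem p (fun n => Cmod (resT t lam x n)) /\
            lp_norm p (fun n => Cmod (resT t lam x n)) <= D * (K * lp_norm p (fun i => Cmod (x i)))).
  { intros x Hx. destruct (HKc _ (fun i => Cmod_ge_0 _) Hx) as [Hm Hn].
    destruct (lp_dominated p _ _ D Hp HD (fun n => geom_conv_ge0 r _ n (proj1 Hr) (fun i => Cmod_ge_0 _))
                (Hdom x) Hm) as [Hm' Hn'].
    split; auto. eapply Rle_trans; [apply Hn' | apply Rmult_le_compat_l; auto]. }
  split; [intros x Hx; apply Hres; auto|].
  exists (D * K). intros x Hx. rewrite Rmult_assoc. apply Hres; auto.
Qed.

End ShiftResolvent.

(** * Spectra of rank-one perturbations *)

Lemma spec_rad_le p Aop c : (forall l, in_spectrum p Aop l -> Cmod l <= c) -> Rbar_le (spec_rad p Aop) c.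
Proof.
  intros H. apply (Lub_Rbar_correct (fun r => exists l, in_spectrum p Aop l /\ r = Cmod l)).
  intros x [l [Hs ->]]. apply H; auto.
Qed.

Lemma Cmod_le_spec_rad p Aop l : in_spectrum p Aop l -> Rbar_le (Cmod l) (spec_rad p Aop).
Proof.
  intros H. apply (Lub_Rbar_correct (fun r => exists l, in_spectrum p Aop l /\ r = Cmod l)). eauto.
Qed.

Lemma resolvent_of_not_in_spectrum p Aop l : ~ in_spectrum p Aop l ->
  exists S, bounded_on Cmod p S /\
    forall x, in_lpC p x ->
      (forall i, S (fun j => (l * x j - Aop x j)%C) i = x i) /\
      (forall i, (l * S x i - Aop (S x) i)%C = x i).
Proof. intros H. apply NNPP in H. exact H. Qed.

Lemma eigenvalue_in_spectrum p Aop lam v k : Rbar_le 1 p -> in_lpC p v -> v k <> RtoC 0 ->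
  (forall n, (lam * v n - Aop v n)%C = RtoC 0) -> (forall n, Aop (fun _ => RtoC 0) n = RtoC 0) ->
  in_spectrum p Aop lam.
Proof.
  intros Hp Hv Hk Hev H0 [S [_ HS]].
  destruct (HS v Hv) as [H1 _]. destruct (HS _ (zero_lp p Hp)) as [H2 _].
  assert (E1 : (fun j => (lam * v j - Aop v j)%C) = (fun _ => RtoC 0))
    by (apply functional_extensionality; intros; apply Hev).
  assert (E2 : (fun j => (lam * RtoC 0 - Aop (fun _ => RtoC 0) j)%C) = (fun _ => RtoC 0))
    by (apply functional_extensionality; intros j; rewrite H0; ring).
  specialize (H1 k). specialize (H2 k). rewrite E1 in H1. rewrite E2 in H2. congruence.
Qed.

Section RankOnePerturbation.
Variables (p : Rbar) (Aop Bop Rop : (nat -> C) -> (nat -> C)) (phi : (nat -> C) -> C) (lam : C).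
Hypothesis Hp : Rbar_le 1 p.
Hypothesis HA : forall x n, Aop x n = (Bop x n + phi x * unitC 0 n)%C.
Hypothesis HBlin : forall x y a b n, Bop (fun j => a * x j + b * y j)%C n = (a * Bop x n + b * Bop y n)%C.
Hypothesis HBlp : forall x, in_lpC p x -> in_lpC p (Bop x).
Hypothesis HRlin : forall x y a b n, Rop (fun j => a * x j + b * y j)%C n = (a * Rop x n + b * Rop y n)%C.
Hypothesis HRleft : forall x n, (lam * Rop x n - Bop (Rop x) n)%C = x n.
Hypothesis HRright : forall y n, Rop (fun j => lam * y j - Bop y j)%C n = y n.
Hypothesis HRbd : bounded_on Cmod p Rop.
Hypothesis Hphilin : forall x y a b, in_lpC p x -> in_lpC p y ->
  phi (fun j => a * x j + b * y j)%C = (a * phi x + b * phi y)%C.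
Hypothesis Hphibd : exists K, 0 <= K /\
  forall x, in_lpC p x -> Cmod (phi x) <= K * lp_norm p (fun i => Cmod (x i)).
Hypothesis Hg : phi (Rop (unitC 0)) <> RtoC 1.

Let u := Rop (unitC 0).
Let g := phi u.

Lemma one_minus_g_neq0 : (1 - g)%C <> RtoC 0.
Proof. intros E. apply Hg. fold u g. replace g with (1 - (1 - g))%C by ring. rewrite E. ring. Qed.

Lemma u_lp : in_lpC p u.
Proof. apply (proj1 HRbd), unitC_lp; auto. Qed.

Definition sherman_morrison (x : nat -> C) (n : nat) : C :=
  (1 * Rop x n + (phi (Rop x) / (1 - g)) * u n)%C.

Lemma sherman_morrison_bounded : bounded_on Cmod p sherman_morrison.
Proof.
  destruct (proj2 HRbd) as [M HM]. destruct Hphibd as [K [HK Hphik]].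
  pose proof one_minus_g_neq0 as Hg1. pose proof u_lp as Hu.
  assert (Hg0 : 0 < Cmod (1 - g)) by (apply Cmod_gt_0; auto).
  pose proof (lp_norm_ge0 p _ Hp (fun i => Cmod_ge_0 (u i)) Hu) as Nu.
  split; [intros x Hx; apply lpC_comb; auto; apply (proj1 HRbd); auto|].
  set (nu := lp_norm p (fun i => Cmod (u i))).
  exists (4 * (M + K * M * nu / Cmod (1 - g))). intros x Hx.
  assert (Hrx : in_lpC p (Rop x)) by (apply (proj1 HRbd); auto).
  set (nx := lp_norm p (fun i => Cmod (x i))).
  pose proof (lp_norm_ge0 p _ Hp (fun i => Cmod_ge_0 (x i)) Hx) as Nx. fold nx in Nx.
  pose proof (HM x Hx) as HMx. fold nx in HMx.
  eapply Rle_trans; [apply (lpC_comb p (Rop x) u 1 (phi (Rop x) / (1 - g)) Hp Hrx Hu)|].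
  rewrite Cmod_1, Cmod_div by auto. fold nu.
  assert (Hc : Cmod (phi (Rop x)) / Cmod (1 - g) * nu <= K * M * nx / Cmod (1 - g) * nu).
  { apply Rmult_le_compat_r; auto. unfold Rdiv. apply Rmult_le_compat_r; [left; apply Rinv_0_lt_compat; auto|].
    eapply Rle_trans; [apply Hphik; auto|]. rewrite Rmult_assoc. apply Rmult_le_compat_l; auto. }
  replace (4 * (M + K * M * nu / Cmod (1 - g)) * nx)
    with (4 * (M * nx + K * M * nx / Cmod (1 - g) * nu)) by (field; lra).
  lra.
Qed.

Lemma sherman_morrison_left x : in_lpC p x ->
  forall i, sherman_morrison (fun j => (lam * x j - Aop x j)%C) i = x i.
Proof.
  intros Hx i. pose proof one_minus_g_neq0.
  assert (Hlx : in_lpC p (fun j => (lam * x j + (-1) * Bop x j)%C)) by (apply lpC_comb; auto).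
  assert (Ez : (fun j => (lam * x j - Aop x j)%C)
               = fun j => (1 * (lam * x j + (-1) * Bop x j) + (- phi x) * unitC 0 j)%C).
  { apply functional_extensionality; intros j. rewrite HA. ring. }
  assert (ERz : Rop (fun j => (lam * x j - Aop x j)%C) = fun n => (1 * x n + (- phi x) * u n)%C).
  { apply functional_extensionality; intros n. rewrite Ez, HRlin.
    replace (fun j => (lam * x j + (-1) * Bop x j)%C) with (fun j => (lam * x j - Bop x j)%C)
      by (apply functional_extensionality; intros; ring).
    rewrite HRright. reflexivity. }
  unfold sherman_morrison. rewrite ERz, Hphilin by (auto using u_lp). fold g. field. auto.
Qed.

Lemma sherman_morrison_right x : in_lpC p x ->
  forall i, (lam * sherman_morrison x i - Aop (sherman_morrison x) i)%C = x i.
Proof.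
  intros Hx i. pose proof one_minus_g_neq0.
  assert (Hrx : in_lpC p (Rop x)) by (apply (proj1 HRbd); auto).
  unfold sherman_morrison. rewrite HA, HBlin, Hphilin by (auto using u_lp). fold g.
  set (c := (phi (Rop x) / (1 - g))%C).
  replace (lam * (1 * Rop x i + c * u i)
           - (1 * Bop (Rop x) i + c * Bop u i + (1 * phi (Rop x) + c * g) * unitC 0 i))%C
    with ((lam * Rop x i - Bop (Rop x) i) + c * (lam * u i - Bop u i)
          - (phi (Rop x) + c * g) * unitC 0 i)%C by ring.
  rewrite (HRleft x i). unfold u. rewrite (HRleft (unitC 0) i). unfold c. field. auto.
Qed.

Lemma not_in_spectrum_rank_one : ~ in_spectrum p Aop lam.
Proof.
  intros H. apply H. exists sherman_morrison. split; [apply sherman_morrison_bounded|].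
  intros x Hx. split; [apply sherman_morrison_left | apply sherman_morrison_right]; auto.
Qed.

End RankOnePerturbation.

Lemma scal_bounded p (c : C) : Rbar_le 1 p -> bounded_on Cmod p (fun x n => (c * x n)%C).
Proof.
  intros Hp.
  assert (Hdom : forall x, in_lpC p x ->
            lp_mem p (fun n => Cmod (c * x n)%C) /\
            lp_norm p (fun n => Cmod (c * x n)%C) <= Cmod c * lp_norm p (fun n => Cmod (x n))).
  { intros x Hx. apply lp_dominated; auto using Cmod_ge_0.
    intros i. rewrite Cmod_mult. split; [apply Rmult_le_pos; apply Cmod_ge_0 | lra]. }
  split; [intros; apply Hdom; auto | exists (Cmod c); intros; apply Hdom; auto].
Qed.

Lemma spec_rad_rank_one p (phi : (nat -> C) -> C) : Rbar_le 1 p ->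
  (forall x y a b, in_lpC p x -> in_lpC p y ->
     phi (fun j => a * x j + b * y j)%C = (a * phi x + b * phi y)%C) ->
  (exists K, 0 <= K /\ forall x, in_lpC p x -> Cmod (phi x) <= K * lp_norm p (fun i => Cmod (x i))) ->
  spec_rad p (fun x n => (phi x * unitC 0 n)%C) = Finite (Cmod (phi (unitC 0))).
Proof.
  intros Hp Hlin Hbd. set (lam0 := phi (unitC 0)).
  pose proof (unitC_lp p 0 Hp) as He0.
  assert (Hphi0 : phi (fun _ => RtoC 0) = RtoC 0).
  { replace (fun _ : nat => RtoC 0) with (fun j => (0 * unitC 0 j + 0 * unitC 0 j)%C)
      by (apply functional_extensionality; intros; ring).
    rewrite Hlin by auto. ring. }
  assert (Hin : in_spectrum p (fun x n => (phi x * unitC 0 n)%C) lam0).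
  { apply (eigenvalue_in_spectrum p _ _ (unitC 0) 0%nat Hp He0).
    - apply RtoC_neq0. lra.
    - intros n. fold lam0. ring.
    - intros n. rewrite Hphi0. ring. }
  assert (Hnot : forall lam, Cmod lam0 < Cmod lam ->
                   ~ in_spectrum p (fun x n => (phi x * unitC 0 n)%C) lam).
  { intros lam Hl. assert (Hlam : lam <> RtoC 0) by (apply Cmod_gt_0; pose proof (Cmod_ge_0 lam0); lra).
    apply (not_in_spectrum_rank_one p _ (fun _ _ => RtoC 0) (fun x n => (/ lam * x n)%C) phi lam Hp).
    - intros; ring.
    - intros; ring.
    - intros; apply zero_lp; auto.
    - intros; field; auto.
    - intros; field; auto.
    - intros; field; auto.
    - apply scal_bounded; auto.
    - auto.
    - auto.
    - intros E.
      replace (fun n => (/ lam * unitC 0 n)%C) with (fun n => (/ lam * unitC 0 n + 0 * unitC 0 n)%C) in E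
        by (apply functional_extensionality; intros; field; auto).
      rewrite Hlin in E by auto. fold lam0 in E.
      assert (El : lam = lam0) by (replace lam0 with (lam * (/ lam * lam0 + 0 * lam0))%C
                                      by (field; auto); rewrite E; ring).
      rewrite El in Hl. lra. }
  apply is_lub_Rbar_unique. split.
  - intros r [l [Hl ->]]. simpl. destruct (Rle_dec (Cmod l) (Cmod lam0)) as [H|H]; auto.
    exfalso. apply (Hnot l); auto. lra.
  - intros b Hb. apply Hb. eauto.
Qed.

(** * The spectral radius of [A] *)

Lemma tprod_ge0 t n : (forall n, 0 <= t n <= 1) -> 0 <= tprod t n.
Proof. intros Ht. induction n; simpl; [lra|]. pose proof (Ht n). nra. Qed.

Lemma pow_le_1 z n : 0 <= z <= 1 -> z ^ n <= 1.
Proof. intros Hz. induction n; simpl; [lra|]. pose proof (pow_le z n ltac:(lra)). nra. Qed.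

Lemma AC_rank_one f t x n : AC f t x n = (TC t x n + pairing f x * unitC 0 n)%C.
Proof. unfold AC, FC, pairing, unitC. destruct n; simpl; ring. Qed.

Lemma TC_lp p t x : Rbar_le 1 p -> (forall n, 0 <= t n <= 1) -> in_lpC p x -> in_lpC p (TC t x).
Proof.
  intros Hp Ht Hx. destruct (lp_shift p _ Hp (fun i => Cmod_ge_0 (x i)) Hx) as [Hs _].
  apply (lp_dominated p _ (shift (fun i => Cmod (x i))) 1 Hp ltac:(lra)); auto.
  - intros [|i]; simpl; [lra | apply Cmod_ge_0].
  - intros [|i]; simpl; [rewrite Cmod_0; lra|].
    rewrite Cmod_mult, Cmod_RtoC_nonneg by apply Ht.
    pose proof (Ht i). pose proof (Cmod_ge_0 (x i)). split; nra.
Qed.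

Lemma ivt_root (F : R -> R) x y : x <= y -> (forall z, x <= z <= y -> continuity_pt F z) ->
  F x <= 0 -> 0 <= F y -> exists z, x <= z <= y /\ F z = 0.
Proof.
  intros Hxy Hc Hx Hy.
  destruct (Req_dec (F x) 0). { exists x; split; auto; lra. }
  destruct (Req_dec (F y) 0). { exists y; split; auto; lra. }
  destruct (Req_dec x y). { subst. lra. }
  destruct (Ranalysis5.IVT_interv F x y Hc ltac:(lra) ltac:(lra) ltac:(lra)) as [z Hz]. eauto.
Qed.

Section OperatorA.
Variables (p : Rbar) (f t : nat -> R) (th : R) (N : nat).
Hypothesis Hp : Rbar_le 1 p.
Hypothesis Hf0 : forall i, 0 <= f i.
Hypothesis Hf : pairing_bounded p f.
Hypothesis Ht : forall n, 0 <= t n <= 1.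
Hypothesis Hth : 0 < th < 1.
Hypothesis HN : forall n, (N <= n)%nat -> t n <= th.

Definition weight n := f n * tprod t n.

Definition resT_e0 rho n := tprod t n / rho ^ S n.

(* for [rho > th], [rho] is an eigenvalue of [A] iff [secular rho = 1] *)
Definition secular rho := Series (fun n => f n * resT_e0 rho n).

Lemma weight_ge0 n : 0 <= weight n.
Proof. apply Rmult_le_pos; auto. apply tprod_ge0; auto. Qed.

Lemma resT_e0_ge0 rho n : 0 < rho -> 0 <= resT_e0 rho n.
Proof.
  intros. apply Rmult_le_pos; [apply tprod_ge0; auto | left; apply Rinv_0_lt_compat, pow_lt; lra].
Qed.

Lemma resT_unitC_real rho n : rho <> 0 -> resT t (RtoC rho) (unitC 0) n = RtoC (resT_e0 rho n).
Proof.
  intros H. unfold resT_e0. induction n.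
  - apply injective_projections; simpl; field; auto.
  - cbn [resT]. rewrite IHn. unfold unitC; cbn [Nat.eqb].
    apply injective_projections; simpl; field; split; auto; apply pow_nonzero; auto.
Qed.

Lemma Cmod_resT_unitC lam n : lam <> RtoC 0 -> Cmod (resT t lam (unitC 0) n) = resT_e0 (Cmod lam) n.
Proof.
  intros H. assert (HL : 0 < Cmod lam) by (apply Cmod_gt_0; auto). unfold resT_e0. induction n.
  - cbn [resT]. rewrite Cmod_div by auto. unfold unitC; cbn [Nat.eqb]. rewrite Cmod_1. simpl. field. lra.
  - cbn [resT]. rewrite Cmod_div by auto. unfold unitC at 1; cbn [Nat.eqb].
    rewrite Cplus_0_l, Cmod_mult, IHn, Cmod_RtoC_nonneg by apply Ht.
    cbn [tprod pow]. field. split; [apply pow_nonzero|]; lra.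
Qed.

Lemma resT_e0_lp rho : th < rho -> lp_mem p (resT_e0 rho).
Proof.
  intros H. assert (Hr : rho <> 0) by lra.
  destruct (resT_bounded t th N (RtoC rho) Ht Hth HN ltac:(rewrite Cmod_RtoC_nonneg; lra) p Hp)
    as [Hm _].
  specialize (Hm (unitC 0) (unitC_lp p 0 Hp)).
  replace (resT_e0 rho) with (fun n => Cmod (resT t (RtoC rho) (unitC 0) n)); auto.
  apply functional_extensionality; intros n.
  rewrite resT_unitC_real by auto. apply Cmod_RtoC_nonneg, resT_e0_ge0. lra.
Qed.

Lemma secular_ex rho : th < rho -> ex_series (fun n => f n * resT_e0 rho n).
Proof.
  intros H. destruct Hf as [K [_ HK]].
  apply (HK _ (fun n => resT_e0_ge0 rho n ltac:(lra)) (resT_e0_lp rho H)).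
Qed.

Lemma weight_ex : ex_series weight.
Proof.
  apply (ex_series_Rext (fun n => f n * resT_e0 1 n)); [|apply secular_ex; lra].
  intros n. unfold weight, resT_e0. rewrite pow1. field.
Qed.

Lemma secular_1 : secular 1 = Series weight.
Proof. apply Series_ext. intros n. unfold weight, resT_e0. rewrite pow1. field. Qed.

Lemma secular_le_antitone r1 r2 : 0 < r1 <= r2 -> ex_series (fun n => f n * resT_e0 r1 n) ->
  secular r2 <= secular r1.
Proof.
  intros Hr Hex. apply Series_le; auto. intros n.
  split; [apply Rmult_le_pos; auto; apply resT_e0_ge0; lra|].
  apply Rmult_le_compat_l; auto. unfold resT_e0, Rdiv. apply Rmult_le_compat_l; [apply tprod_ge0; auto|].
  apply Rinv_le_contravar; [apply pow_lt; lra | apply pow_incr; lra].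
Qed.

Lemma secular_le_div rho : 1 <= rho -> secular rho <= Series weight / rho.
Proof.
  intros Hr. unfold Rdiv. rewrite Rmult_comm, <- Series_scal_l. apply Series_le.
  - intros n. split; [apply Rmult_le_pos; auto; apply resT_e0_ge0; lra|].
    unfold weight, resT_e0.
    replace (f n * (tprod t n / rho ^ S n)) with (/ rho ^ S n * (f n * tprod t n)) by (unfold Rdiv; ring).
    apply Rmult_le_compat_r; [apply weight_ge0|].
    apply Rinv_le_contravar; [lra|]. cbn [pow]. rewrite <- (Rmult_1_r rho) at 1.
    apply Rmult_le_compat_l; [lra | apply pow_R1_Rle; auto].
  - apply ex_series_Rscal, weight_ex.
Qed.

Lemma secular_PSeries rho : 0 < rho -> secular rho = / rho * PSeries weight (/ rho).
Proof.
  intros Hr. unfold secular, PSeries. rewrite <- Series_scal_l. apply Series_ext. intros n.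
  unfold weight, resT_e0. rewrite pow_inv. cbn [pow]. field. split; [apply pow_nonzero|]; lra.
Qed.

Lemma weight_PSeries_ex rho : th < rho -> ex_series (fun n => weight n * (/ rho) ^ n).
Proof.
  intros H. apply (ex_series_Rext (fun n => rho * (f n * resT_e0 rho n))).
  - intros n. unfold weight, resT_e0. rewrite pow_inv. cbn [pow]. field. split; [apply pow_nonzero|]; lra.
  - apply ex_series_Rscal, secular_ex; auto.
Qed.

Lemma PSeries_weight_1 : PSeries weight 1 = Series weight.
Proof. apply Series_ext. intros n. rewrite pow1. ring. Qed.

Lemma PSeries_weight_le z : 0 <= z <= 1 -> PSeries weight z <= Series weight.
Proof.
  intros Hz. apply Series_le; [|apply weight_ex]. intros n. pose proof (weight_ge0 n).
  split; [apply Rmult_le_pos; auto; apply pow_le; lra|].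
  rewrite <- (Rmult_1_r (weight n)) at 2. apply Rmult_le_compat_l; auto. apply pow_le_1; lra.
Qed.

Lemma PSeries_weight_ge z : 1 <= z -> ex_series (fun n => weight n * z ^ n) ->
  Series weight <= PSeries weight z.
Proof.
  intros Hz Hex. apply Series_le; auto. intros n. pose proof (weight_ge0 n). split; auto.
  rewrite <- (Rmult_1_r (weight n)) at 1. apply Rmult_le_compat_l; auto. apply pow_R1_Rle; lra.
Qed.

Lemma char_continuous z z' : 0 <= z -> z < z' -> ex_series (fun n => weight n * z' ^ n) ->
  continuity_pt (fun z => z * PSeries weight z - 1) z.
Proof.
  intros Hz Hzz Hex.
  apply (continuity_pt_minus (fun z => z * PSeries weight z) (fun _ => 1)); [|apply continuity_pt_const; intros a b; auto].
  apply (continuity_pt_mult (fun z => z) (PSeries weight)); [apply continuity_pt_id|].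
  apply PSeries_continuity.
  assert (Hd : CV_disk weight z').
  { apply (ex_series_ext _ _ (fun n => eq_sym (Rabs_pos_eq _ (Rmult_le_pos _ _ (weight_ge0 n) (pow_le z' n ltac:(lra)))))).
    auto. }
  pose proof (proj1 (Lub_Rbar_correct (CV_disk weight)) z' Hd) as Hub.
  unfold CV_radius. rewrite Rabs_pos_eq by auto.
  destruct (Lub_Rbar (CV_disk weight)); simpl in *; auto; lra.
Qed.

Lemma char_root a b z' : 0 <= a <= b -> b < z' -> ex_series (fun n => weight n * z' ^ n) ->
  a * PSeries weight a <= 1 -> 1 <= b * PSeries weight b ->
  exists z, a <= z <= b /\ z * PSeries weight z = 1.
Proof.
  intros Hab Hbz Hex Ha Hb.
  destruct (ivt_root (fun z => z * PSeries weight z - 1) a b) as [z [Hz Fz]]; try lra.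
  - intros z Hz. apply (char_continuous z z'); auto; lra.
  - exists z. split; auto. lra.
Qed.

Lemma secular_of_root z : 0 < z -> z * PSeries weight z = 1 -> secular (/ z) = 1.
Proof. intros Hz H. rewrite secular_PSeries, Rinv_inv by (apply Rinv_0_lt_compat; auto). auto. Qed.
Lemma A_not_in_spectrum lam : th < Cmod lam -> pairing f (resT t lam (unitC 0)) <> RtoC 1 ->
  ~ in_spectrum p (AC f t) lam.
Proof.
  intros Hl Hg. assert (Hlam : lam <> RtoC 0) by (apply Cmod_gt_0; lra).
  apply (not_in_spectrum_rank_one p (AC f t) (TC t) (resT t lam) (pairing f) lam Hp (AC_rank_one f t)).
  - apply TC_lin.
  - intros; apply TC_lp; auto.
  - intros; apply resT_lin; auto.
  - intros; apply resT_left; auto.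
  - intros; apply resT_right; auto.
  - apply (resT_bounded t th N lam); auto.
  - intros; apply (pairing_lin p); auto.
  - apply pairing_bound; auto.
  - auto.
Qed.

Lemma Cmod_pairing_resT_le lam : th < Cmod lam ->
  Cmod (pairing f (resT t lam (unitC 0))) <= secular (Cmod lam).
Proof.
  intros Hl. assert (Hlam : lam <> RtoC 0) by (apply Cmod_gt_0; lra).
  assert (Hm : in_lpC p (resT t lam (unitC 0))).
  { apply (resT_bounded t th N lam Ht Hth HN Hl p Hp), unitC_lp; auto. }
  eapply Rle_trans; [apply (Cmod_pairing_le p); auto|].
  right. apply Series_ext. intros n. rewrite Cmod_resT_unitC; auto.
Qed.

Lemma spec_rad_A_le c : th <= c -> (forall rho, c < rho -> secular rho < 1) ->
  Rbar_le (spec_rad p (AC f t)) c.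
Proof.
  intros Hc Hsec. apply spec_rad_le. intros l Hl.
  destruct (Rle_dec (Cmod l) c) as [H|H]; auto. exfalso.
  revert Hl. apply A_not_in_spectrum; [lra|]. intros E.
  pose proof (Cmod_pairing_resT_le l ltac:(lra)) as Hle. rewrite E, Cmod_1 in Hle.
  specialize (Hsec (Cmod l) ltac:(lra)). lra.
Qed.

Lemma A_eigenvalue rho : 0 < rho -> lp_mem p (resT_e0 rho) -> secular rho = 1 ->
  in_spectrum p (AC f t) (RtoC rho).
Proof.
  intros Hr Hm Hsec. set (v := fun n => RtoC (resT_e0 rho n)).
  assert (Hv : in_lpC p v).
  { unfold in_lpC. replace (fun i => Cmod (v i)) with (resT_e0 rho); auto.
    apply functional_extensionality; intros n. unfold v. rewrite Cmod_RtoC_nonneg; auto.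
    apply resT_e0_ge0; auto. }
  apply (eigenvalue_in_spectrum p _ _ v 0%nat Hp Hv).
  - apply RtoC_neq0. unfold resT_e0; simpl. apply Rmult_integral_contrapositive.
    split; [lra | apply Rinv_neq_0_compat; lra].
  - intros n. rewrite AC_rank_one.
    assert (E : pairing f v = RtoC 1).
    { unfold pairing, v; simpl. rewrite (Series_ext (fun i => f i * 0) (fun _ => 0)) by (intros; ring).
      rewrite Series_const0. unfold secular in Hsec. rewrite Hsec. reflexivity. }
    rewrite E. unfold v, resT_e0, unitC, TC.
    destruct n; simpl; apply injective_projections; simpl; try field;
      repeat split; first [apply pow_nonzero; lra | lra].
  - intros n. rewrite AC_rank_one, pairing_zero. destruct n; unfold TC; simpl; ring.
Qed.

Lemma le_spec_rad_A rho : th < rho -> secular rho = 1 -> Rbar_le rho (spec_rad p (AC f t)).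
Proof.
  intros Hr Hsec. pose proof (A_eigenvalue rho ltac:(lra) (resT_e0_lp rho Hr) Hsec) as H.
  pose proof (Cmod_le_spec_rad _ _ _ H) as Hle. rewrite Cmod_RtoC_nonneg in Hle by lra. exact Hle.
Qed.

Lemma zero_in_spectrum_of_t_neq0 : (forall n, t n <> 0) -> in_spectrum p (AC f t) (RtoC 0).
Proof.
  intros Hnz [S0 [_ HS]]. destruct (HS (unitC 0) (unitC_lp p 0 Hp)) as [_ H2].
  set (y := S0 (unitC 0)) in *.
  (* [A y = - e0] forces [t k y k = 0] for every [k] *)
  assert (Hy : y = fun _ => RtoC 0).
  { apply functional_extensionality; intros k. specialize (H2 (S k)).
    rewrite AC_rank_one in H2. unfold TC, unitC in H2; cbn [Nat.eqb] in H2.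
    pose proof (RtoC_neq0 _ (Hnz k)) as Htk.
    replace (y k) with (/ RtoC (t k) * - (0 * y (S k) - (RtoC (t k) * y k + pairing f y * 0)))%C
      by (field; auto).
    rewrite H2. ring. }
  specialize (H2 0%nat). rewrite AC_rank_one, Hy, pairing_zero in H2.
  unfold TC, unitC in H2. apply (f_equal fst) in H2. simpl in H2. lra.
Qed.

Lemma zero_eigenvalue_of_t_eq0 M : t M = 0 -> f M = 0 -> in_spectrum p (AC f t) (RtoC 0).
Proof.
  intros HtM HfM. apply (eigenvalue_in_spectrum p _ (RtoC 0) (unitC M) M Hp (unitC_lp p M Hp)).
  - unfold unitC. rewrite Nat.eqb_refl. apply RtoC_neq0. lra.
  - assert (Hs : pairing f (unitC M) = RtoC 0).
    { unfold pairing.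
      assert (Z1 : forall i, f i * fst (unitC M i) = 0).
      { intros i; unfold unitC; destruct (Nat.eqb i M) eqn:E; simpl; [|ring].
        apply Nat.eqb_eq in E; subst; rewrite HfM; ring. }
      assert (Z2 : forall i, f i * snd (unitC M i) = 0)
        by (intros i; unfold unitC; destruct (Nat.eqb i M); simpl; ring).
      rewrite (Series_ext _ _ Z1), (Series_ext _ _ Z2), Series_const0. reflexivity. }
    intros k. rewrite AC_rank_one, Hs. destruct k; unfold TC, unitC; simpl; [ring|].
    destruct (Nat.eqb k M) eqn:E; [apply Nat.eqb_eq in E; subst; rewrite HtM|]; ring.
  - intros k. rewrite AC_rank_one, pairing_zero. destruct k; unfold TC; simpl; ring.
Qed.

Lemma zero_in_spectrum : Series weight = 0 -> in_spectrum p (AC f t) (RtoC 0).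
Proof.
  intros H0. destruct (classic (exists n, t n = 0)) as [Hex|Hnz].
  2: { apply zero_in_spectrum_of_t_neq0. intros n E. apply Hnz. eauto. }
  destruct (Wf_nat.dec_inh_nat_subset_has_unique_least_element (fun n => t n = 0)
              (fun n => classic _) Hex) as [M [[HM Hleast] _]].
  assert (HP : 0 < tprod t M).
  { assert (Hpos : forall j, (j <= M)%nat -> 0 < tprod t j).
    { induction j as [|j IH]; intros Hj; simpl; [lra|].
      apply Rmult_lt_0_compat; [apply IH; lia|].
      destruct (Ht j) as [Hj0 _]. destruct Hj0 as [|E]; auto.
      specialize (Hleast j (eq_sym E)). lia. }
    apply Hpos; lia. }
  apply (zero_eigenvalue_of_t_eq0 M HM).
  assert (Hw : weight M = 0) by (apply (Series_nonneg_eq0 weight M weight_ge0 weight_ex H0)).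
  unfold weight in Hw. apply Rmult_integral in Hw. destruct Hw; auto. lra.
Qed.
Let s := spec_rad p (AC f t).

Lemma weight_PSeries_beyond_1 :
  exists z', 1 < z' /\ th < / z' /\ ex_series (fun n => weight n * z' ^ n).
Proof.
  exists (/ ((1 + th) / 2)). rewrite Rinv_inv. split; [|split].
  - rewrite <- Rinv_1. apply Rinv_lt_contravar; lra.
  - lra.
  - apply weight_PSeries_ex; auto. lra.
Qed.

Lemma secular_lt_1 rho : 1 <= Series weight < rho -> secular rho < 1.
Proof.
  intros Hr. pose proof (secular_le_div rho ltac:(lra)).
  apply Rle_lt_trans with (Series weight / rho); auto.
  apply Rmult_lt_reg_r with rho; [lra|]. unfold Rdiv. rewrite Rmult_assoc, Rinv_l by lra. lra.
Qed.

Lemma spec_rad_A_le_R0 : 1 <= Series weight -> Rbar_le s (Series weight).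
Proof. intros H. apply spec_rad_A_le; auto; [lra|]. intros rho Hr. apply secular_lt_1. lra. Qed.

Lemma spec_rad_A_gt_1 : 1 < Series weight -> Rbar_lt 1 s.
Proof.
  intros H. set (R0 := Series weight) in *.
  destruct weight_PSeries_beyond_1 as [z' [Hz' [Hthz Hexz]]].
  assert (HiR : 0 < / R0 < 1) by (split; [apply Rinv_0_lt_compat | rewrite <- Rinv_1; apply Rinv_lt_contravar]; lra).
  destruct (char_root (/ R0) 1 z') as [z [Hz Fz]]; auto; try lra.
  - pose proof (PSeries_weight_le (/ R0) ltac:(lra)) as Hle. fold R0 in Hle.
    assert (Hm : / R0 * PSeries weight (/ R0) <= / R0 * R0) by (apply Rmult_le_compat_l; lra).
    rewrite Rinv_l in Hm by lra. lra.
  - rewrite PSeries_weight_1. fold R0. lra.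
  - assert (Hz1 : z <> 1) by (intros ->; rewrite PSeries_weight_1 in Fz; fold R0 in Fz; lra).
    assert (Hr : 1 < / z) by (rewrite <- Rinv_1; apply Rinv_lt_contravar; nra).
    pose proof (le_spec_rad_A (/ z) ltac:(lra) (secular_of_root z ltac:(lra) Fz)).
    apply Rbar_lt_le_trans with (/ z); [simpl; lra | auto].
Qed.

Lemma spec_rad_A_eq_1 : Series weight = 1 -> s = Finite 1.
Proof.
  intros H. apply Rbar_le_antisym.
  - rewrite <- H. apply spec_rad_A_le_R0. lra.
  - apply le_spec_rad_A; auto; [lra|]. rewrite secular_1; auto.
Qed.

(* continuity of [z * PSeries weight z] at [1] gives [z1 > 1] with [secular (/ z1) < 1] *)
Lemma spec_rad_A_lt_1 : Series weight < 1 -> Rbar_lt s 1.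
Proof.
  intros H. set (R0 := Series weight) in *.
  destruct weight_PSeries_beyond_1 as [z' [Hz' [Hthz Hexz]]].
  pose proof (char_continuous 1 z' ltac:(lra) Hz' Hexz) as Hc.
  destruct (Hc ((1 - R0) / 2) ltac:(lra)) as [alp [Halp Hal]].
  set (z1 := Rmin (1 + alp / 2) ((1 + z') / 2)).
  assert (Hz1 : 1 < z1 < z') by (unfold z1, Rmin; destruct (Rle_dec (1 + alp / 2) ((1 + z') / 2)); lra).
  assert (Hlt : z1 * PSeries weight z1 < 1).
  { assert (Hd : Rabs (z1 - 1) < alp)
      by (unfold z1, Rmin; destruct (Rle_dec (1 + alp / 2) ((1 + z') / 2)); rewrite Rabs_pos_eq; lra).
    specialize (Hal z1 (conj (conj I (Rlt_not_eq _ _ (proj1 Hz1))) Hd)). simpl in Hal. unfold R_dist in Hal.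
    rewrite PSeries_weight_1, Rmult_1_l in Hal. fold R0 in Hal.
    apply Rabs_def2 in Hal. lra. }
  set (c := / z1).
  assert (Hc1 : c < 1) by (unfold c; rewrite <- Rinv_1; apply Rinv_lt_contravar; nra).
  assert (Hcth : th < c).
  { apply Rlt_trans with (/ z'); auto. apply Rinv_lt_contravar; nra. }
  assert (Hsc : secular c < 1)
    by (unfold c; rewrite secular_PSeries, Rinv_inv by (apply Rinv_0_lt_compat; lra); auto).
  apply Rbar_le_lt_trans with c; [|simpl; auto].
  apply spec_rad_A_le; auto; [lra|]. intros rho Hr.
  pose proof (secular_le_antitone c rho ltac:(lra) (secular_ex c Hcth)).
  lra.
Qed.

Lemma geom_lp_of_not_in_spectrum l0 : 0 < l0 -> ~ in_spectrum p (AC f t) (RtoC l0) ->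
  lp_mem p (fun n => tprod t n / l0 ^ n).
Proof.
  intros Hl0 Hns. destruct (resolvent_of_not_in_spectrum _ _ _ Hns) as [S0 [Hb HS]].
  destruct (HS (unitC 0) (unitC_lp p 0 Hp)) as [_ H2]. set (y := S0 (unitC 0)) in *.
  assert (Hy : in_lpC p y) by (apply (proj1 Hb), unitC_lp; auto).
  assert (Hl0C : RtoC l0 <> RtoC 0) by (apply RtoC_neq0; lra).
  (* [(l0 I - A) y = e0] is the recursion [l0 y (k+1) = t k y k] below the first row *)
  assert (yrec : forall k, y (S k) = (/ RtoC l0 * (RtoC (t k) * y k))%C).
  { intros k. specialize (H2 (S k)). rewrite AC_rank_one in H2. unfold TC, unitC in H2; cbn [Nat.eqb] in H2.
    replace (y (S k))
      with (/ RtoC l0 * ((RtoC l0 * y (S k) - (RtoC (t k) * y k + pairing f y * RtoC 0))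
                        + RtoC (t k) * y k))%C by (field; auto).
    rewrite H2. ring. }
  assert (yform : forall n, y n = (y 0%nat * RtoC (tprod t n / l0 ^ n))%C).
  { induction n; simpl.
    - apply injective_projections; simpl; field.
    - rewrite yrec, IHn, <- RtoC_inv by lra.
      apply injective_projections; simpl; field; split; try lra; apply pow_nonzero; lra. }
  assert (Hy0 : y 0%nat <> RtoC 0).
  { intros E. assert (Ey : y = fun _ => RtoC 0)
      by (apply functional_extensionality; intros n; rewrite yform, E; ring).
    specialize (H2 0%nat). rewrite AC_rank_one, Ey, pairing_zero in H2.
    unfold TC, unitC in H2. apply (f_equal fst) in H2. simpl in H2. lra. }
  assert (Hmy : 0 < Cmod (y 0%nat)) by (apply Cmod_gt_0; auto).
  apply (lp_dominated p _ (fun i => Cmod (y i)) (/ Cmod (y 0%nat)) Hp); auto using Cmod_ge_0.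
  - left; apply Rinv_0_lt_compat; auto.
  - intros n. assert (Hb0 : 0 <= tprod t n / l0 ^ n).
    { apply Rmult_le_pos; [apply tprod_ge0; auto | left; apply Rinv_0_lt_compat, pow_lt; lra]. }
    split; auto. rewrite (yform n), Cmod_mult, Cmod_RtoC_nonneg by auto.
    right. field. split; [apply pow_nonzero; lra | apply Rgt_not_eq, Hmy].
Qed.

Lemma R0_le_spec_rad_A : 0 < Series weight < 1 -> Rbar_le (Series weight) s.
Proof.
  intros H. set (R0 := Series weight) in *.
  apply Rbar_not_lt_le. intros Hlt.
  assert (Hl0 : exists l0, 0 < l0 < R0 /\ Rbar_lt s l0).
  { unfold s in *. destruct (spec_rad p (AC f t)) as [s0| |]; simpl in Hlt |- *.
    - exists (Rmax ((s0 + R0) / 2) (R0 / 2)).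
      unfold Rmax. destruct (Rle_dec ((s0 + R0) / 2) (R0 / 2)); split; lra.
    - contradiction.
    - exists (R0 / 2). split; auto. lra. }
  destruct Hl0 as [l0 [Hl0 Hsl0]].
  assert (Hout : forall rho, l0 <= rho -> ~ in_spectrum p (AC f t) (RtoC rho)).
  { intros rho Hr Hin. pose proof (Cmod_le_spec_rad _ _ _ Hin) as Hle.
    rewrite Cmod_RtoC_nonneg in Hle by lra. apply (Rbar_le_not_lt _ _ Hle).
    apply Rbar_lt_le_trans with l0; auto. }
  set (b := fun n => tprod t n / l0 ^ n).
  assert (Hbm : lp_mem p b) by (apply geom_lp_of_not_in_spectrum; [lra | apply Hout; lra]).
  assert (Hb0 : forall n, 0 <= b n).
  { intros n. apply Rmult_le_pos; [apply tprod_ge0; auto | left; apply Rinv_0_lt_compat, pow_lt; lra]. }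
  (* the radius of convergence of [sum weight n z^n] exceeds [/ R0] *)
  assert (Hexz0 : ex_series (fun n => weight n * (/ l0) ^ n)).
  { destruct Hf as [K [_ HK]]. apply (ex_series_Rext (fun n => f n * b n)); [|apply HK; auto].
    intros n. unfold weight, b. rewrite pow_inv. unfold Rdiv; ring. }
  assert (HiR : 1 < / R0) by (rewrite <- Rinv_1; apply Rinv_lt_contravar; nra).
  assert (Hz0 : / R0 < / l0) by (apply Rinv_lt_contravar; nra).
  assert (HexR : ex_series (fun n => weight n * (/ R0) ^ n)).
  { apply (ex_series_le_nonneg _ (fun n => weight n * (/ l0) ^ n)); auto. intros n. pose proof (weight_ge0 n).
    split; [apply Rmult_le_pos; auto; apply pow_le; lra|].
    apply Rmult_le_compat_l; auto. apply pow_incr; lra. }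
  destruct (char_root 1 (/ R0) (/ l0)) as [z [Hz Fz]]; auto; try lra.
  { rewrite Rmult_1_l, PSeries_weight_1. fold R0. lra. }
  { pose proof (PSeries_weight_ge (/ R0) ltac:(lra) HexR) as Hge. fold R0 in Hge.
    assert (Hm : / R0 * R0 <= / R0 * PSeries weight (/ R0)) by (apply Rmult_le_compat_l; lra).
    rewrite Rinv_l in Hm by lra. lra. }
  assert (Hz1 : z <> 1) by (intros ->; rewrite PSeries_weight_1 in Fz; fold R0 in Fz; lra).
  set (rho := / z).
  assert (Hrho : R0 <= rho) by (unfold rho; rewrite <- (Rinv_inv R0); apply Rinv_le_contravar; nra).
  assert (Hrho1 : rho < 1) by (unfold rho; rewrite <- Rinv_1; apply Rinv_lt_contravar; nra).
  assert (Hgeo : lp_mem p (resT_e0 rho)).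
  { apply (lp_dominated p _ b (/ rho) Hp); auto; [left; apply Rinv_0_lt_compat; lra|].
    intros n. split; [apply resT_e0_ge0; lra|]. unfold resT_e0, b. cbn [pow].
    unfold Rdiv. rewrite Rinv_mult.
    replace (/ rho * (tprod t n * / l0 ^ n)) with (tprod t n * (/ rho * / l0 ^ n)) by ring.
    apply Rmult_le_compat_l; [apply tprod_ge0; auto|].
    apply Rmult_le_compat_l; [left; apply Rinv_0_lt_compat; lra|].
    apply Rinv_le_contravar; [apply pow_lt; lra | apply pow_incr; lra]. }
  apply (Hout rho); [lra|].
  apply A_eigenvalue; [lra | auto | apply secular_of_root; lra].
Qed.

Lemma spec_rad_A_lt_1_bounds : Series weight < 1 -> Rbar_le (Series weight) s /\ Rbar_lt s 1.
Proof.
  intros H. split; [|apply spec_rad_A_lt_1; auto].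
  pose proof (Series_nonneg weight weight_ge0 weight_ex) as H0.
  destruct (Req_dec (Series weight) 0) as [E|E].
  - rewrite E. pose proof (Cmod_le_spec_rad _ _ _ (zero_in_spectrum E)) as Hle.
    rewrite Cmod_0 in Hle. exact Hle.
  - apply R0_le_spec_rad_A. lra.
Qed.

End OperatorA.

(** * The operators [F] and [F (I - T)^-1] *)

Lemma LimSup_lt_1_bound (t : nat -> R) : Rbar_lt (LimSup_seq t) 1 ->
  exists th N, 0 < th < 1 /\ forall n, (N <= n)%nat -> t n <= th.
Proof.
  intros H. destruct (ex_LimSup_seq t) as [l Hl]. rewrite (is_LimSup_seq_unique _ _ Hl) in H.
  destruct l as [l0| |]; simpl in H, Hl.
  - set (th := Rmax ((l0 + 1) / 2) (1 / 2)).
    assert (Hth : l0 < th /\ 0 < th < 1) by (unfold th, Rmax; destruct (Rle_dec ((l0 + 1) / 2) (1 / 2)); lra).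
    assert (He : 0 < th - l0) by lra.
    destruct (Hl (mkposreal _ He)) as [_ [N HN]]. exists th, N. split; [lra|].
    intros n Hn. specialize (HN n Hn). simpl in HN. lra.
  - contradiction.
  - destruct (Hl (1 / 2)) as [N HN]. exists (1 / 2), N. split; [lra|]. intros n Hn. specialize (HN n Hn). lra.
Qed.

Lemma FR_bounded p f : Rbar_le 1 p -> (forall i, 0 <= f i) -> pairing_bounded p f ->
  bounded_on Rabs p (FR f).
Proof.
  intros Hp Hf0 [K [_ HK]].
  assert (E : forall x, (fun i => Rabs (FR f x i)) = head (Rabs (Series (fun i => f i * x i)))).
  { intros x. apply functional_extensionality; intros [|n]; simpl; auto. apply Rabs_R0. }
  split; [intros x Hx; rewrite E; apply (lp_head p _ Hp (Rabs_pos _))|].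
  exists K. intros x Hx. rewrite E.
  eapply Rle_trans; [apply (lp_head p _ Hp (Rabs_pos _))|].
  assert (Eabs : forall i, Rabs (f i * x i) = f i * Rabs (x i))
    by (intros; rewrite Rabs_mult, (Rabs_pos_eq (f i)); auto).
  destruct (HK (fun i => Rabs (x i)) (fun i => Rabs_pos _) Hx) as [Hex Hle].
  eapply Rle_trans; [apply Series_Rabs, (ex_series_Rext _ _ (fun i => eq_sym (Eabs i)) Hex)|].
  cbv beta. rewrite (Series_ext _ _ Eabs). exact Hle.
Qed.

Lemma FR_nonneg p f x : (forall i, 0 <= f i) -> pairing_bounded p f ->
  in_lpR p x -> (forall i, 0 <= x i) -> forall i, 0 <= FR f x i.
Proof.
  intros Hf0 [K [_ HK]] Hx Hx0 [|i]; simpl; [|lra].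
  assert (E : forall i, f i * Rabs (x i) = f i * x i) by (intros; rewrite Rabs_pos_eq; auto).
  destruct (HK (fun i => Rabs (x i)) (fun i => Rabs_pos _) Hx) as [Hex _].
  apply Series_nonneg; [intros; apply Rmult_le_pos; auto | apply (ex_series_Rext _ _ E Hex)].
Qed.

Lemma IminusTC_eq t x : IminusTC t x = fun j => (RtoC 1 * x j - TC t x j)%C.
Proof. apply functional_extensionality; intros j. unfold IminusTC. ring. Qed.

Section ResolventOfF.
Variables (p : Rbar) (f t : nat -> R) (th : R) (N : nat).
Hypothesis Hp : Rbar_le 1 p.
Hypothesis Hf0 : forall i, 0 <= f i.
Hypothesis Hf : pairing_bounded p f.
Hypothesis Ht : forall n, 0 <= t n <= 1.
Hypothesis Hth : 0 < th < 1.
Hypothesis HN : forall n, (N <= n)%nat -> t n <= th.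

Let R1 := resT t (RtoC 1).

Lemma R1_bounded : bounded_on Cmod p R1.
Proof. apply resT_bounded with th N; auto. rewrite Cmod_1; lra. Qed.

Lemma R1_inverse x : in_lpC p x ->
  (forall i, R1 (IminusTC t x) i = x i) /\ (forall i, IminusTC t (R1 x) i = x i).
Proof.
  intros _. assert (H1 : RtoC 1 <> RtoC 0) by (apply RtoC_neq0; lra).
  rewrite !IminusTC_eq. split; intros i; [apply resT_right | apply resT_left]; auto.
Qed.

Lemma inverse_IminusT_eq_R1 S :
  (forall x, in_lpC p x -> (forall i, S (IminusTC t x) i = x i) /\ (forall i, IminusTC t (S x) i = x i)) ->
  forall x, in_lpC p x -> S x = R1 x.
Proof.
  intros HS x Hx. apply functional_extensionality; intros i.
  assert (Hr : in_lpC p (R1 x)) by (apply (proj1 R1_bounded); auto).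
  assert (E : IminusTC t (R1 x) = x) by (apply functional_extensionality, (proj2 (R1_inverse x Hx))).
  rewrite <- E at 1. apply (HS (R1 x) Hr).
Qed.

Lemma pairing_R1_unitC : pairing f (R1 (unitC 0)) = RtoC (Series (weight f t)).
Proof.
  unfold pairing, R1.
  assert (Z1 : forall i, f i * fst (resT t (RtoC 1) (unitC 0) i) = weight f t i).
  { intros i. rewrite resT_unitC_real by lra. unfold weight, resT_e0. cbn [fst RtoC].
    rewrite pow1. field. }
  assert (Z2 : forall i, f i * snd (resT t (RtoC 1) (unitC 0) i) = 0).
  { intros i. rewrite resT_unitC_real by lra. cbn [snd RtoC]. ring. }
  rewrite (Series_ext _ _ Z1), (Series_ext _ _ Z2), Series_const0. reflexivity.
Qed.

Lemma spec_rad_F_resolvent S :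
  (forall x, in_lpC p x -> (forall i, S (IminusTC t x) i = x i) /\ (forall i, IminusTC t (S x) i = x i)) ->
  spec_rad p (fun x => FC f (S x)) = Finite (Series (weight f t)).
Proof.
  intros HS. pose proof (inverse_IminusT_eq_R1 S HS) as HSR.
  assert (HR1lp : forall x, in_lpC p x -> in_lpC p (R1 x)) by (apply (proj1 R1_bounded)).
  assert (E : (fun x => FC f (S x)) = fun x n => (pairing f (S x) * unitC 0 n)%C).
  { apply functional_extensionality; intros x. apply functional_extensionality; intros [|n];
      unfold FC, pairing, unitC; apply injective_projections; simpl; ring. }
  rewrite E, spec_rad_rank_one; auto.
  - rewrite HSR by (apply unitC_lp; auto).
    rewrite pairing_R1_unitC, Cmod_RtoC_nonneg; [reflexivity|].
    apply Series_nonneg; [apply (weight_ge0 f t Hf0 Ht) | apply (weight_ex p f t th N); auto].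
  - intros x y a b Hx Hy.
    rewrite (HSR _ (proj1 (lpC_comb p x y a b Hp Hx Hy))), (HSR x Hx), (HSR y Hy).
    replace (R1 (fun j => a * x j + b * y j)%C) with (fun j => a * R1 x j + b * R1 y j)%C.
    + apply (pairing_lin p); auto.
    + apply functional_extensionality; intros j. unfold R1. rewrite resT_lin; auto. apply RtoC_neq0; lra.
  - destruct (pairing_bound p f Hf0 Hf) as [K [HK HKb]].
    destruct R1_bounded as [_ [M HM]].
    exists (K * Rmax M 0). split; [apply Rmult_le_pos; auto; apply Rmax_r|]. intros x Hx.
    rewrite (HSR x Hx). eapply Rle_trans; [apply HKb; auto|]. rewrite Rmult_assoc.
    apply Rmult_le_compat_l; auto. eapply Rle_trans; [apply HM; auto|].
    apply Rmult_le_compat_r; [apply lp_norm_ge0; auto using Cmod_ge_0 | apply Rmax_l].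
Qed.

End ResolventOfF.

Theorem mainTheorem8 (p q : Rbar) (f t : nat -> R)
  (hp : Rbar_le (Finite 1) p) (hq : Rbar_le (Finite 1) q)
  (hpq : Rbar_plus (Rbar_inv p) (Rbar_inv q) = Finite 1)
  (hf : in_lpR q f) (hf0 : forall i, 0 <= f i)
  (ht : forall i, 0 <= t i <= 1)
  (hlim : Rbar_lt (LimSup_seq t) (Finite 1)) :
  bounded_on Rabs p (FR f) /\
  (forall x, in_lpR p x -> (forall i, 0 <= x i) -> forall i, 0 <= FR f x i) /\
  (exists S, bounded_on Cmod p S /\
     forall x, in_lpC p x ->
       (forall i, S (IminusTC t x) i = x i) /\ (forall i, IminusTC t (S x) i = x i)) /\
  ex_series (fun i => f i * tprod t i) /\
  (forall S, bounded_on Cmod p S ->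
     (forall x, in_lpC p x ->
       (forall i, S (IminusTC t x) i = x i) /\ (forall i, IminusTC t (S x) i = x i)) ->
     let R0 := spec_rad p (fun x => FC f (S x)) in
     R0 = Finite (Series (fun i => f i * tprod t i)) /\
     ((Rbar_le (spec_rad p (AC f t)) R0 /\ Rbar_lt (Finite 1) (spec_rad p (AC f t))) \/
      (R0 = Finite 1 /\ spec_rad p (AC f t) = Finite 1) \/
      (Rbar_le R0 (spec_rad p (AC f t)) /\ Rbar_lt (spec_rad p (AC f t)) (Finite 1)))).
Proof.
  assert (Hf : pairing_bounded p f).
  { apply (holder p q); auto. unfold in_lpR in hf.
    replace f with (fun i => Rabs (f i)); auto.
    apply functional_extensionality; intros; apply Rabs_pos_eq; auto. }
  destruct (LimSup_lt_1_bound t hlim) as [th [N [Hth HN]]].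
  split; [apply FR_bounded; auto|].
  split; [intros; apply (FR_nonneg p); auto|].
  split; [exists (resT t (RtoC 1)); split; [apply R1_bounded with th N | apply R1_inverse]; auto|].
  split; [apply (weight_ex p f t th N); auto|].
  intros S _ HS R0.
  assert (ER : R0 = Finite (Series (weight f t))) by (apply (spec_rad_F_resolvent p f t th N); auto).
  split; [exact ER|]. rewrite ER.
  destruct (total_order_T (Series (weight f t)) 1) as [[Hlt|Heq]|Hgt].
  - right; right. apply (spec_rad_A_lt_1_bounds p f t th N); auto.
  - right; left. split; [rewrite Heq; reflexivity | apply (spec_rad_A_eq_1 p f t th N); auto].
  - left. split; [apply (spec_rad_A_le_R0 p f t th N) | apply (spec_rad_A_gt_1 p f t th N)]; auto; lra.
Qed.
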